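(* There exists a left-total optimal machine, but no left-total machine can be effectively optimal.
   Context: A machine is a partial computable function from binary strings to binary strings; for a machine $V$ let $C_V(x)=\min\{|p|\colon V(p)=x\}$ (plain Kolmogorov complexity with respect to $V$). A machine $U$ is optimal if for every machine $V$ there is $c$ with $C_U(x)\le C_V(x)+c$ for all $x$. $U$ is effectively optimal if for every machine $V$ there is a total computable function $h$ with $|h(x)|\le|x|+c$ for some $c$ and all $x$, such that $V(x)=U(h(x))$ for all $x$ (both undefined or both defined and equal). A machine is left-total if for every $n$ the $n$-bit strings in its domain form an initial segment in the lexicographic ordering. *)

(* A self-contained model of computability:
   partial mu-recursive functions (on lists of naturals), transported to
   binary strings via the bijective base-2 numeration. *)
From Stdlib Require Import List Arith.
Import ListNotations.

Inductive code : Type :=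
| cZero : code
| cSucc : code
| cProj : nat -> code
| cComp : code -> list code -> code
| cPrec : code -> code -> code
| cMin  : code -> code.

Inductive eval : code -> list nat -> nat -> Prop :=
| ev_zero xs : eval cZero xs 0
| ev_succ xs : eval cSucc xs (S (hd 0 xs))
| ev_proj i xs : eval (cProj i) xs (nth i xs 0)
| ev_comp f gs xs ys y :
    evals gs xs ys -> eval f ys y -> eval (cComp f gs) xs y
| ev_prec0 f g xs y : eval f xs y -> eval (cPrec f g) (0 :: xs) y
| ev_precS f g n xs z y :
    eval (cPrec f g) (n :: xs) z -> eval g (n :: z :: xs) y ->
    eval (cPrec f g) (S n :: xs) y
| ev_min f xs n :
    eval f (n :: xs) 0 ->
    (forall m, m < n -> exists k, eval f (m :: xs) (S k)) ->
    eval (cMin f) xs n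
with evals : list code -> list nat -> list nat -> Prop :=
| evs_nil xs : evals [] xs []
| evs_cons g gs xs y ys :
    eval g xs y -> evals gs xs ys -> evals (g :: gs) xs (y :: ys).

Definition bitstring := list bool.

(* bijective base-2 numeration: a bijection bitstring -> nat *)
Fixpoint bs2nat (s : bitstring) : nat :=
  match s with
  | [] => 0
  | b :: t => 2 * bs2nat t + (if b then 2 else 1)
  end.

Definition machine := bitstring -> option bitstring.

Definition partial_computable (V : machine) : Prop :=
  exists e : code, forall x y,
    V x = Some y <-> eval e [bs2nat x] (bs2nat y).

Definition total_computable (h : bitstring -> bitstring) : Prop :=
  partial_computable (fun x => Some (h x)).

(** Plain complexity: [is_C V x n] iff C_V(x) = n
    (i.e. n = min {|p| : V p = x}; no such n exists iff the set is empty). *)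
Definition is_C (V : machine) (x : bitstring) (n : nat) : Prop :=
  (exists p, V p = Some x /\ length p = n) /\
  (forall p, V p = Some x -> n <= length p).

(** C_U(x) <= C_V(x) + c, with the convention C = +infinity when undefined *)
Definition C_le_plus (U V : machine) (c : nat) (x : bitstring) : Prop :=
  forall n, is_C V x n -> exists m, is_C U x m /\ m <= n + c.

Definition optimal (U : machine) : Prop :=
  forall V : machine, partial_computable V ->
    exists c, forall x, C_le_plus U V c x.

Definition effectively_optimal (U : machine) : Prop :=
  forall V : machine, partial_computable V ->
    exists h : bitstring -> bitstring, total_computable h /\
    exists c, forall x, length (h x) <= length x + c /\ V x = U (h x).

Fixpoint lex_lt (x y : bitstring) : bool :=
  match x, y with
  | a :: x', b :: y' =>
      (negb a && b) || (Bool.eqb a b && lex_lt x' y')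
  | _, _ => false
  end.

Definition in_dom (V : machine) (x : bitstring) : Prop := exists y, V x = Some y.

Definition left_total (V : machine) : Prop :=
  forall x y : bitstring, length x = length y ->
    lex_lt y x = true -> in_dom V x -> in_dom V y.

(** The optimal machine U runs a fixed universal machine U0 on all programs of every length L in
    parallel and, for each L, gives the i-th L-bit string in lexicographic order the output of the
    i-th L-bit program seen to halt.  At most 2^L programs of length L halt, so the L-bit part of
    dom U is an initial segment (left-totality), and a program p of the machine with code k, which
    U0 runs as 1^k 0 p, gets a U-description of length |p| + k + 1 (optimality).

    Conversely, let U be left-total and suppose a total computable h, with code k, translates a
    machine V into U with |h x| <= |x| + c.  On input 1^k 0 w, V searches for two distinct words
    w1, w2 whose images h(1^k 0 w1), h(1^k 0 w2) have equal length (they exist by counting among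
    words of length k + c + 3), and halts exactly when w is the one, say w2, whose image is
    lexicographically not smaller.  Then h(1^k 0 w2) is in dom U, hence so is h(1^k 0 w1) by
    left-totality, so V also halts on 1^k 0 w1: a contradiction.

    The universal machine is built explicitly: a small-step stack machine for [eval] has a
    primitive recursive step function on numerical codes of states, which gives a clocked
    universal function [run]. *)

From Stdlib Require Import List Arith Lia ClassicalEpsilon Classical.
Import ListNotations.

(** * A small-step machine for [eval] *)

(* [Scheme] gives no induction hypotheses for the premises of [ev_min], which sit under an
   existential quantifier. *)
Section EvalNestedInd.
Variable P : code -> list nat -> nat -> Prop.
Variable Q : list code -> list nat -> list nat -> Prop.
Hypothesis P_zero : forall xs, P cZero xs 0.
Hypothesis P_succ : forall xs, P cSucc xs (S (hd 0 xs)).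
Hypothesis P_proj : forall i xs, P (cProj i) xs (nth i xs 0).
Hypothesis P_comp : forall f gs xs ys y,
  evals gs xs ys -> Q gs xs ys -> eval f ys y -> P f ys y -> P (cComp f gs) xs y.
Hypothesis P_prec0 : forall f g xs y, eval f xs y -> P f xs y -> P (cPrec f g) (0 :: xs) y.
Hypothesis P_precS : forall f g n xs z y,
  eval (cPrec f g) (n :: xs) z -> P (cPrec f g) (n :: xs) z ->
  eval g (n :: z :: xs) y -> P g (n :: z :: xs) y -> P (cPrec f g) (S n :: xs) y.
Hypothesis P_min : forall f xs n, eval f (n :: xs) 0 -> P f (n :: xs) 0 ->
  (forall m, m < n -> exists k, eval f (m :: xs) (S k) /\ P f (m :: xs) (S k)) -> P (cMin f) xs n.
Hypothesis Q_nil : forall xs, Q [] xs [].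
Hypothesis Q_cons : forall g gs xs y ys,
  eval g xs y -> P g xs y -> evals gs xs ys -> Q gs xs ys -> Q (g :: gs) xs (y :: ys).

Fixpoint eval_ind_nested (c : code) (xs : list nat) (y : nat) (H : eval c xs y) {struct H} : P c xs y :=
  match H in eval c xs y return P c xs y with
  | ev_zero xs => P_zero xs
  | ev_succ xs => P_succ xs
  | ev_proj i xs => P_proj i xs
  | ev_comp f gs xs ys y Hs Hf =>
      P_comp f gs xs ys y Hs
        ((fix evals_ind_nested gs xs ys (H : evals gs xs ys) {struct H} : Q gs xs ys :=
           match H in evals gs xs ys return Q gs xs ys with
           | evs_nil xs => Q_nil xs
           | evs_cons g gs xs y ys Hg Hgs =>
               Q_cons g gs xs y ys Hg (eval_ind_nested _ _ _ Hg) Hgs (evals_ind_nested _ _ _ Hgs)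
           end) gs xs ys Hs) Hf (eval_ind_nested _ _ _ Hf)
  | ev_prec0 f g xs y Hf => P_prec0 f g xs y Hf (eval_ind_nested _ _ _ Hf)
  | ev_precS f g n xs z y H1 H2 =>
      P_precS f g n xs z y H1 (eval_ind_nested _ _ _ H1) H2 (eval_ind_nested _ _ _ H2)
  | ev_min f xs n H0 Hlt =>
      P_min f xs n H0 (eval_ind_nested _ _ _ H0)
        (fun m Hm => match Hlt m Hm with
                     | ex_intro _ k Hk => ex_intro _ k (conj Hk (eval_ind_nested _ _ _ Hk))
                     end)
  end.
End EvalNestedInd.

Inductive frame : Type :=
| FComp (f : code) (rest : list code) (xs : list nat) (acc : list nat)
| FPrec (g : code) (i n : nat) (xs : list nat)
| FMin (f : code) (n : nat) (xs : list nat).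

Inductive state : Type :=
| Call (c : code) (xs : list nat) (K : list frame)
| Ret (v : nat) (K : list frame).

Definition step (s : state) : state :=
  match s with
  | Call cZero xs K => Ret 0 K
  | Call cSucc xs K => Ret (S (hd 0 xs)) K
  | Call (cProj i) xs K => Ret (nth i xs 0) K
  | Call (cComp f []) xs K => Call f [] K
  | Call (cComp f (g :: rest)) xs K => Call g xs (FComp f rest xs [] :: K)
  | Call (cPrec f g) [] K => s
  | Call (cPrec f g) (n :: xs) K => Call f xs (FPrec g 0 n xs :: K)
  | Call (cMin f) xs K => Call f (0 :: xs) (FMin f 0 xs :: K)
  | Ret v [] => s
  | Ret v (FComp f [] xs acc :: K) => Call f (rev (v :: acc)) K
  | Ret v (FComp f (g :: rest) xs acc :: K) => Call g xs (FComp f rest xs (v :: acc) :: K)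
  | Ret z (FPrec g i n xs :: K) =>
      if Nat.eqb i n then Ret z K else Call g (i :: z :: xs) (FPrec g (S i) n xs :: K)
  | Ret v (FMin f n xs :: K) =>
      match v with 0 => Ret n K | S _ => Call f (S n :: xs) (FMin f (S n) xs :: K) end
  end.

Fixpoint steps (n : nat) (s : state) : state :=
  match n with 0 => s | S n => steps n (step s) end.

Lemma steps_add : forall a b s, steps (a + b) s = steps b (steps a s).
Proof. induction a; intros; simpl; auto. Qed.

Lemma steps_fix : forall n s, step s = s -> steps n s = s.
Proof. induction n; intros; simpl; auto. rewrite H; auto. Qed.

Lemma steps_final : forall n v, steps n (Ret v []) = Ret v [].
Proof. intros; apply steps_fix; reflexivity. Qed.

Definition reach (s t : state) : Prop := exists n, steps n s = t.

Lemma reach_trans : forall s t u, reach s t -> reach t u -> reach s u.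
Proof. intros s t u [a Ha] [b Hb]. exists (a + b). rewrite steps_add, Ha; auto. Qed.

Lemma reach_step : forall s t, reach (step s) t -> reach s t.
Proof. intros s t [a Ha]. exists (S a). auto. Qed.

Lemma reach_refl : forall s, reach s s.
Proof. exists 0; auto. Qed.

Lemma reach_comp_args : forall xs rest ys,
  Forall2 (fun g y => forall K, reach (Call g xs K) (Ret y K)) rest ys ->
  forall f K acc v, reach (Ret v (FComp f rest xs acc :: K)) (Call f (rev (v :: acc) ++ ys) K).
Proof.
  induction 1; intros.
  - apply reach_step. simpl. rewrite app_nil_r. apply reach_refl.
  - apply reach_step. simpl. eapply reach_trans. apply H.
    eapply reach_trans. apply IHForall2. simpl. rewrite <- app_assoc. simpl. apply reach_refl.
Qed.

(* The second component lets the induction pass through the [FPrec] frame of a recursion that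
   continues up to some [m >= n]. *)
Definition eval_reach_inv (c : code) (xs : list nat) (y : nat) : Prop :=
  (forall K, reach (Call c xs K) (Ret y K)) /\
  match c, xs with
  | cPrec f g, n :: xs' => forall K m, n <= m ->
      reach (Call f xs' (FPrec g 0 m xs' :: K)) (Ret y (FPrec g n m xs' :: K))
  | _, _ => True
  end.

Lemma eval_reach_strong : forall c xs y, eval c xs y -> eval_reach_inv c xs y.
Proof.
  apply (eval_ind_nested eval_reach_inv
    (fun gs xs ys => Forall2 (fun g y => forall K, reach (Call g xs K) (Ret y K)) gs ys)).
  - split; auto; intros; apply reach_step, reach_refl.
  - split; auto; intros; apply reach_step, reach_refl.
  - split; auto; intros; apply reach_step, reach_refl.
  - intros f gs xs ys y Hs Qs Hf [Pf _]. split; auto. intro K. destruct Qs as [|g y1 rest ys' Pg Qr].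
    + apply reach_step. simpl. apply Pf.
    + apply reach_step; simpl. eapply reach_trans. apply Pg.
      eapply reach_trans. apply reach_comp_args; eauto. simpl. apply Pf.
  - intros f g xs y Hf [Pf _]. split.
    + intros K. apply reach_step. simpl. eapply reach_trans. apply Pf.
      apply reach_step. simpl. apply reach_refl.
    + intros K m _. apply Pf.
  - intros f g n xs z y H1 [_ IHprec] H2 [IHg _].
    assert (Hm : forall K m, S n <= m ->
      reach (Call f xs (FPrec g 0 m xs :: K)) (Ret y (FPrec g (S n) m xs :: K))).
    { intros K m Hle. eapply reach_trans. apply (IHprec K m). lia.
      apply reach_step. simpl. replace (Nat.eqb n m) with false by (symmetry; apply Nat.eqb_neq; lia).
      apply IHg. }
    split; auto.
    intros K. apply reach_step. simpl. eapply reach_trans. apply Hm; auto.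
    apply reach_step. simpl. rewrite Nat.eqb_refl. apply reach_refl.
  - intros f xs n H0 [P0 _] Hlt. split; auto. intros K.
    assert (Hj : forall j, j <= n ->
      reach (Call f (0 :: xs) (FMin f 0 xs :: K)) (Call f (j :: xs) (FMin f j xs :: K))).
    { induction j; intros.
      - apply reach_refl.
      - eapply reach_trans. apply IHj; lia.
        destruct (Hlt j) as [k [_ [Pk _]]]. lia.
        eapply reach_trans. apply Pk. apply reach_step. simpl. apply reach_refl. }
    apply reach_step. simpl. eapply reach_trans. apply (Hj n); auto.
    eapply reach_trans. apply P0. apply reach_step. simpl. apply reach_refl.
  - intros; constructor.
  - intros g gs xs y ys _ [Pg _] _ Q. constructor; auto.
Qed.

Lemma eval_reach : forall c xs y, eval c xs y -> forall K, reach (Call c xs K) (Ret y K).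
Proof. intros. apply eval_reach_strong; auto. Qed.

Definition push_stack (s : state) (K0 : list frame) : state :=
  match s with Call c xs K => Call c xs (K ++ K0) | Ret v K => Ret v (K ++ K0) end.

Lemma step_push_stack : forall s K0, (forall v, s <> Ret v []) ->
  step (push_stack s K0) = push_stack (step s) K0.
Proof.
  intros [c xs K | v K] K0 H.
  - destruct c; simpl; auto.
    + destruct l; simpl; auto.
    + destruct xs; simpl; auto.
  - destruct K as [|F K]. { exfalso; eapply H; eauto. }
    destruct F; simpl; auto.
    + destruct rest; simpl; auto.
    + destruct (Nat.eqb i n); simpl; auto.
    + destruct v; simpl; auto.
Qed.

Lemma steps_push_stack_inv : forall n s K0 v, steps n (push_stack s K0) = Ret v [] ->
  exists j w, j <= n /\ steps j s = Ret w [] /\ steps (n - j) (Ret w K0) = Ret v [].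
Proof.
  induction n; intros s K0 v H.
  - simpl in H. destruct s as [c xs K|w K]; simpl in H; [discriminate|].
    injection H as -> H'. apply app_eq_nil in H' as [-> ->].
    exists 0, v. simpl. auto.
  - destruct (match s with Ret w [] => Some w | _ => None end) as [w|] eqn:E.
    + destruct s as [|w' [|]]; try discriminate. inversion E; subst.
      exists 0, w. simpl in H |- *. split; [lia|auto].
    + simpl in H. rewrite step_push_stack in H.
      2:{ intros w' ->. discriminate. }
      destruct (IHn _ _ _ H) as [j [w [Hj [H1 H2]]]].
      exists (S j), w. simpl. split. lia. split; auto.
Qed.

Definition sound_upto (N : nat) : Prop := forall c xs K v, steps N (Call c xs K) = Ret v [] ->
  exists w j, j <= N /\ eval c xs w /\ steps j (Ret w K) = Ret v [].

Lemma sound_call : forall N, (forall m, m < N -> sound_upto m) ->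
  forall n c xs K v, steps n (Call c xs K) = Ret v [] -> n < N ->
  exists w j, j <= n /\ eval c xs w /\ steps j (Ret w K) = Ret v [].
Proof.
  intros N IH n c xs K v H Hn.
  change (Call c xs K) with (push_stack (Call c xs []) K) in H.
  destruct (steps_push_stack_inv _ _ _ _ H) as [j [w [Hj [H1 H2]]]].
  destruct (IH j ltac:(lia) _ _ _ _ H1) as [w' [j' [_ [He H3]]]].
  rewrite steps_final in H3. inversion H3; subst.
  exists w, (n - j). split. lia. auto.
Qed.

Lemma sound_comp_frame : forall N, (forall m, m < N -> sound_upto m) -> forall f xs K v rest m acc y,
  m < N -> steps m (Ret y (FComp f rest xs acc :: K)) = Ret v [] ->
  exists ys w j, evals rest xs ys /\ eval f (rev (y :: acc) ++ ys) w /\ j <= m /\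
    steps j (Ret w K) = Ret v [].
Proof.
  intros N IH f xs K v rest. induction rest as [|g rest IHr]; intros m acc y Hm H;
    (destruct m as [|m]; [discriminate|]); simpl in H.
  - destruct (sound_call N IH _ _ _ _ _ H ltac:(lia)) as [w [j [Hj [He Hs]]]].
    exists [], w, j. rewrite app_nil_r. repeat split; auto. constructor.
  - destruct (sound_call N IH _ _ _ _ _ H ltac:(lia)) as [w1 [j1 [Hj1 [He1 Hs1]]]].
    destruct (IHr j1 _ _ ltac:(lia) Hs1) as [ys [w [j [Hys [Hf [Hj Hs]]]]]].
    exists (w1 :: ys), w, j. repeat split; auto. constructor; auto.
    simpl in Hf. rewrite <- app_assoc in Hf. exact Hf. lia.
Qed.

Lemma sound_prec_frame : forall N, (forall m, m < N -> sound_upto m) -> forall f g xs K v n d i z m,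
  n = i + d -> eval (cPrec f g) (i :: xs) z -> m < N ->
  steps m (Ret z (FPrec g i n xs :: K)) = Ret v [] ->
  exists w j, eval (cPrec f g) (n :: xs) w /\ j <= m /\ steps j (Ret w K) = Ret v [].
Proof.
  intros N IH f g xs K v n d. induction d; intros i z m Hn Hz Hm H;
    (destruct m as [|m]; [discriminate|]); simpl in H.
  - rewrite Hn, Nat.add_0_r, Nat.eqb_refl in H. exists z, m. subst. rewrite Nat.add_0_r. auto.
  - replace (Nat.eqb i n) with false in H by (symmetry; apply Nat.eqb_neq; lia).
    destruct (sound_call N IH _ _ _ _ _ H ltac:(lia)) as [w1 [j1 [Hj1 [He1 Hs1]]]].
    destruct (IHd (S i) w1 j1 ltac:(lia) (ev_precS _ _ _ _ _ _ Hz He1) ltac:(lia) Hs1)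
      as [w [j [A [B C]]]].
    exists w, j. repeat split; auto. lia.
Qed.

Lemma sound_min_frame : forall N, (forall m, m < N -> sound_upto m) -> forall f xs K v m j u,
  m < N -> eval f (j :: xs) u -> (forall i, i < j -> exists k, eval f (i :: xs) (S k)) ->
  steps m (Ret u (FMin f j xs :: K)) = Ret v [] ->
  exists w j', eval (cMin f) xs w /\ j' <= m /\ steps j' (Ret w K) = Ret v [].
Proof.
  intros N IH f xs K v m. induction m as [m IHm] using lt_wf_ind.
  intros j u Hm Hu Hlt H. destruct m as [|m]; [discriminate|]. simpl in H.
  destruct u as [|k].
  - exists j, m. split. constructor; auto. auto.
  - destruct (sound_call N IH _ _ _ _ _ H ltac:(lia)) as [w1 [j1 [Hj1 [He1 Hs1]]]].
    destruct (IHm j1 ltac:(lia) (S j) w1 ltac:(lia) He1) as [w [j' [A [B C]]]]; auto.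
    { intros i Hi. destruct (Nat.eq_dec i j). subst; eauto. apply Hlt; lia. }
    exists w, j'. repeat split; auto. lia.
Qed.

Lemma steps_sound : forall N, sound_upto N.
Proof.
  intro N. induction N as [N IH] using lt_wf_ind.
  intros c xs K v H. destruct N as [|N]. { discriminate. }
  simpl in H.
  destruct c as [ | | i | f gs | f g | f ]; simpl in H.
  - exists 0, N. split. lia. split; auto. constructor.
  - exists (S (hd 0 xs)), N. split. lia. split; auto. constructor.
  - exists (nth i xs 0), N. split. lia. split; auto. constructor.
  - destruct gs as [|g rest].
    + destruct (sound_call (S N) IH _ _ _ _ _ H ltac:(lia)) as [w [j [Hj [He Hs]]]].
      exists w, j. split; [lia|split; [|auto]]. econstructor; eauto. constructor.
    + destruct (sound_call (S N) IH _ _ _ _ _ H ltac:(lia)) as [w1 [j1 [Hj1 [He1 Hs1]]]].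
      destruct (sound_comp_frame (S N) IH _ _ _ _ _ j1 [] w1 ltac:(lia) Hs1) as [ys [w [j [A [B [C D]]]]]].
      exists w, j. split; [lia|split; [|auto]]. econstructor. constructor; eauto. exact B.
  - destruct xs as [|n xs].
    + rewrite steps_fix in H; [discriminate|reflexivity].
    + destruct (sound_call (S N) IH _ _ _ _ _ H ltac:(lia)) as [w1 [j1 [Hj1 [He1 Hs1]]]].
      destruct (sound_prec_frame (S N) IH f g xs K v n n 0 w1 j1 eq_refl (ev_prec0 _ _ _ _ He1)
                  ltac:(lia) Hs1)
        as [w [j [A [B C]]]].
      exists w, j. repeat split; auto. lia.
  - destruct (sound_call (S N) IH _ _ _ _ _ H ltac:(lia)) as [w1 [j1 [Hj1 [He1 Hs1]]]].
    destruct (sound_min_frame (S N) IH f xs K v j1 0 w1 ltac:(lia) He1) as [w [j [A [B C]]]].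
    { intros; lia. } auto.
    exists w, j. repeat split; auto. lia.
Qed.

Theorem eval_iff_halts : forall c xs v, eval c xs v <-> exists n, steps n (Call c xs []) = Ret v [].
Proof.
  split.
  - intros H. apply (eval_reach _ _ _ H []).
  - intros [n H]. destruct (steps_sound n c xs [] v H) as [w [j [_ [He Hs]]]].
    rewrite steps_final in Hs. inversion Hs; subst; auto.
Qed.

Lemma steps_halted_mono : forall n m s v, steps n s = Ret v [] -> n <= m -> steps m s = Ret v [].
Proof.
  intros. replace m with (n + (m - n)) by lia. rewrite steps_add, H. apply steps_final.
Qed.

Theorem eval_deterministic : forall c xs y1 y2, eval c xs y1 -> eval c xs y2 -> y1 = y2.
Proof.
  intros c xs y1 y2 H1 H2. apply eval_iff_halts in H1 as [n1 H1]. apply eval_iff_halts in H2 as [n2 H2].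
  pose proof (steps_halted_mono n1 (n1 + n2) _ _ H1 ltac:(lia)).
  pose proof (steps_halted_mono n2 (n1 + n2) _ _ H2 ltac:(lia)). rewrite H in H0. inversion H0; auto.
Qed.

Record tcode := {
  tc_code : code;
  tc_fun : list nat -> nat;
  tc_eval : forall xs, eval tc_code xs (tc_fun xs)
}.

Definition tcode_ext (F : tcode) (g : list nat -> nat) (H : forall xs, tc_fun F xs = g xs) : tcode.
Proof. refine {| tc_code := tc_code F; tc_fun := g |}. intros; rewrite <- H; apply tc_eval. Defined.

Definition tZero : tcode.
Proof. refine {| tc_code := cZero; tc_fun := fun _ => 0 |}. intros; constructor. Defined.
Definition tSucc : tcode.
Proof.
  refine {| tc_code := cSucc; tc_fun := fun xs => S (nth 0 xs 0) |}. intros [|x xs]; constructor.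
Defined.
Definition tProj (i : nat) : tcode.
Proof. refine {| tc_code := cProj i; tc_fun := fun xs => nth i xs 0 |}. intros; constructor. Defined.

Lemma evals_tcodes : forall (Gs : list tcode) xs, evals (map tc_code Gs) xs (map (fun G => tc_fun G xs) Gs).
Proof. induction Gs; simpl; constructor; auto. apply tc_eval. Qed.

Definition tComp (F : tcode) (Gs : list tcode) : tcode.
Proof.
  refine {| tc_code := cComp (tc_code F) (map tc_code Gs);
            tc_fun := fun xs => tc_fun F (map (fun G => tc_fun G xs) Gs) |}.
  intros. econstructor. apply evals_tcodes. apply tc_eval.
Defined.

Definition prec_fun (F G : tcode) (xs : list nat) : nat :=
  nat_rect (fun _ => nat) (tc_fun F [nth 1 xs 0]) (fun n z => tc_fun G [n; z; nth 1 xs 0]) (nth 0 xs 0).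

Definition tPrec (F G : tcode) : tcode.
Proof.
  refine {| tc_code := cComp (cPrec (tc_code F) (tc_code G)) [cProj 0; cProj 1]; tc_fun := prec_fun F G |}.
  intros. econstructor. repeat econstructor. unfold prec_fun.
  induction (nth 0 xs 0); simpl.
  - constructor. apply tc_eval.
  - econstructor. apply IHn. apply tc_eval.
Defined.

Definition tIfZero : tcode.
Proof.
  refine {| tc_code := cComp (cPrec (cProj 0) (cProj 3)) [cProj 0; cProj 1; cProj 2];
            tc_fun := fun xs => match nth 0 xs 0 with 0 => nth 1 xs 0 | S _ => nth 2 xs 0 end |}.
  intros. econstructor. repeat econstructor. simpl.
  induction (nth 0 xs 0).
  - apply ev_prec0. apply (ev_proj 0).
  - econstructor. apply IHn. apply (ev_proj 3).
Defined.

Definition tPred : tcode.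
Proof. refine (tcode_ext (tPrec tZero (tProj 0)) (fun xs => pred (nth 0 xs 0)) _).
  intros; simpl; unfold prec_fun; destruct (nth 0 xs 0); reflexivity. Defined.

Definition tAdd : tcode.
Proof. refine (tcode_ext (tPrec (tProj 0) (tComp tSucc [tProj 1])) (fun xs => nth 0 xs 0 + nth 1 xs 0) _).
  intros; simpl; unfold prec_fun; induction (nth 0 xs 0); simpl; auto. Defined.

Definition tSub : tcode.
Proof. refine (tcode_ext (tComp (tPrec (tProj 0) (tComp tPred [tProj 1])) [tProj 1; tProj 0])
   (fun xs => nth 0 xs 0 - nth 1 xs 0) _).
  intros; simpl; unfold prec_fun; simpl. induction (nth 1 xs 0); simpl; try lia.
  Defined.

Fixpoint tConst0 (n : nat) : tcode := match n with 0 => tZero | S n => tComp tSucc [tConst0 n] end.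
Definition tConst (n : nat) : tcode.
Proof. refine (tcode_ext (tConst0 n) (fun _ => n) _). induction n; simpl; auto. Defined.

Definition tIfEq : tcode.
Proof.
  refine (tcode_ext
    (tComp tIfZero [tComp tAdd [tComp tSub [tProj 0; tProj 1]; tComp tSub [tProj 1; tProj 0]]; tProj 2; tProj 3])
    (fun xs => if Nat.eqb (nth 0 xs 0) (nth 1 xs 0) then nth 2 xs 0 else nth 3 xs 0) _).
  intros; simpl. destruct (Nat.eqb_spec (nth 0 xs 0) (nth 1 xs 0)).
  - replace (nth 0 xs 0 - nth 1 xs 0 + (nth 1 xs 0 - nth 0 xs 0)) with 0 by lia. auto.
  - destruct (nth 0 xs 0 - nth 1 xs 0 + (nth 1 xs 0 - nth 0 xs 0)) eqn:E; auto. lia.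
Defined.

Definition tIter (F : tcode) : tcode.
Proof.
  refine (tcode_ext (tPrec (tProj 0) (tComp F [tProj 1]))
    (fun xs => Nat.iter (nth 0 xs 0) (fun s => tc_fun F [s]) (nth 1 xs 0)) _).
  intros; simpl; unfold prec_fun; induction (nth 0 xs 0); simpl; auto. Defined.

(** * Cantor pairing and lists of numbers *)

Fixpoint tri (n : nat) : nat := match n with 0 => 0 | S m => S m + tri m end.

Definition tTri : tcode.
Proof.
  refine (tcode_ext (tPrec tZero (tComp tAdd [tComp tSucc [tProj 0]; tProj 1])) (fun xs => tri (nth 0 xs 0)) _).
  intros; simpl; unfold prec_fun; induction (nth 0 xs 0); simpl; auto. Defined.

Fixpoint tri_root (n : nat) : nat :=
  match n with 0 => 0 | S m => let r := tri_root m in match tri (S r) - S m with 0 => S r | _ => r end end.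

Definition tTriRoot : tcode.
Proof.
  refine (tcode_ext (tPrec tZero (tComp tIfZero
      [tComp tSub [tComp tTri [tComp tSucc [tProj 1]]; tComp tSucc [tProj 0]]; tComp tSucc [tProj 1]; tProj 1]))
    (fun xs => tri_root (nth 0 xs 0)) _).
  intros; simpl; unfold prec_fun; induction (nth 0 xs 0); simpl; auto. Defined.

Lemma tri_root_spec : forall n, tri (tri_root n) <= n < tri (S (tri_root n)).
Proof.
  induction n. simpl; lia.
  change (tri_root (S n)) with (let r := tri_root n in match tri (S r) - S n with 0 => S r | _ => r end).
  cbv zeta. remember (tri_root n) as r.
  destruct (tri (S r) - S n) eqn:E; simpl in *; lia.
Qed.

Lemma tri_mono : forall a b, a <= b -> tri a <= tri b.
Proof. intros a b H; induction H; simpl; lia. Qed.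

Lemma tri_root_unique : forall n k, tri k <= n < tri (S k) -> tri_root n = k.
Proof.
  intros n k H. pose proof (tri_root_spec n).
  destruct (Nat.lt_total (tri_root n) k) as [L|[L|L]]; auto.
  - pose proof (tri_mono (S (tri_root n)) k L). lia.
  - pose proof (tri_mono (S k) (tri_root n) L). lia.
Qed.

Definition cpair (a b : nat) : nat := tri (a + b) + b.
Definition csnd (n : nat) : nat := n - tri (tri_root n).
Definition cfst (n : nat) : nat := tri_root n - csnd n.

Lemma tri_root_cpair : forall a b, tri_root (cpair a b) = a + b.
Proof. intros; apply tri_root_unique; unfold cpair; simpl; lia. Qed.
Lemma cfst_cpair : forall a b, cfst (cpair a b) = a.
Proof. intros; unfold cfst, csnd; rewrite tri_root_cpair; unfold cpair; lia. Qed.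
Lemma csnd_cpair : forall a b, csnd (cpair a b) = b.
Proof. intros; unfold csnd; rewrite tri_root_cpair; unfold cpair; lia. Qed.
Lemma cpair_surj : forall n, cpair (cfst n) (csnd n) = n.
Proof.
  intros; unfold cpair, cfst, csnd. pose proof (tri_root_spec n). simpl in H.
  replace (tri_root n - (n - tri (tri_root n)) + (n - tri (tri_root n))) with (tri_root n) by lia. lia.
Qed.
Lemma cpair_ge_r : forall a b, b <= cpair a b.
Proof. intros; unfold cpair; lia. Qed.
Arguments cpair : simpl never.
Arguments cfst : simpl never.
Arguments csnd : simpl never.

Definition tPair : tcode :=
  tcode_ext (tComp tAdd [tComp tTri [tComp tAdd [tProj 0; tProj 1]]; tProj 1])
    (fun xs => cpair (nth 0 xs 0) (nth 1 xs 0)) (fun _ => eq_refl).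
Definition tSnd : tcode :=
  tcode_ext (tComp tSub [tProj 0; tComp tTri [tComp tTriRoot [tProj 0]]])
    (fun xs => csnd (nth 0 xs 0)) (fun _ => eq_refl).
Definition tFst : tcode :=
  tcode_ext (tComp tSub [tComp tTriRoot [tProj 0]; tSnd])
    (fun xs => cfst (nth 0 xs 0)) (fun _ => eq_refl).

Fixpoint enc_list (l : list nat) : nat := match l with [] => 0 | x :: l => S (cpair x (enc_list l)) end.
Definition list_hd (l : nat) : nat := cfst (pred l).
Definition list_tl (l : nat) : nat := csnd (pred l).
Lemma list_hd_cons : forall x y, list_hd (S (cpair x y)) = x.
Proof. intros; unfold list_hd; simpl; apply cfst_cpair. Qed.
Lemma list_tl_cons : forall x y, list_tl (S (cpair x y)) = y.
Proof. intros; unfold list_tl; simpl; apply csnd_cpair. Qed.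
Lemma list_hd_0 : list_hd 0 = 0. Proof. reflexivity. Qed.
Lemma list_tl_0 : list_tl 0 = 0. Proof. reflexivity. Qed.
Arguments list_hd : simpl never.
Arguments list_tl : simpl never.

Definition list_nth (i l : nat) : nat := list_hd (Nat.iter i list_tl l).
Lemma list_nth_enc : forall i xs, list_nth i (enc_list xs) = nth i xs 0.
Proof.
  unfold list_nth. induction i; intros [|x xs].
  - reflexivity.
  - simpl. apply list_hd_cons.
  - assert (forall j, Nat.iter j list_tl 0 = 0) as H by (induction j; simpl; auto; rewrite IHj; reflexivity).
    rewrite H. reflexivity.
  - rewrite Nat.iter_succ_r. simpl enc_list. rewrite list_tl_cons. apply IHi.
Qed.

Definition rev_step (s : nat) : nat :=
  match cfst s with 0 => s | _ => cpair (list_tl (cfst s)) (S (cpair (list_hd (cfst s)) (csnd s))) end.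
Definition list_rev (l : nat) : nat := csnd (Nat.iter l rev_step (cpair l 0)).

Lemma enc_list_length : forall xs, length xs <= enc_list xs.
Proof. induction xs; simpl; auto. pose proof (cpair_ge_r a (enc_list xs)). lia. Qed.

Lemma rev_step_iter : forall xs acc n, length xs <= n ->
  Nat.iter n rev_step (cpair (enc_list xs) (enc_list acc)) = cpair 0 (enc_list (rev xs ++ acc)).
Proof.
  induction xs; intros acc n Hn.
  - simpl. clear Hn. induction n; simpl; auto. rewrite IHn. unfold rev_step. rewrite cfst_cpair. auto.
  - destruct n as [|n]; simpl in Hn; [lia|].
    rewrite Nat.iter_succ_r. simpl enc_list at 1. unfold rev_step at 2. rewrite cfst_cpair.
    rewrite list_tl_cons, list_hd_cons, csnd_cpair.
    change (S (cpair a (enc_list acc))) with (enc_list (a :: acc)). rewrite IHxs by lia.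
    simpl. rewrite <- app_assoc. auto.
Qed.

Lemma list_rev_enc : forall xs, list_rev (enc_list xs) = enc_list (rev xs).
Proof.
  intros. unfold list_rev. change (cpair (enc_list xs) 0) with (cpair (enc_list xs) (enc_list [])).
  rewrite rev_step_iter by apply enc_list_length.
  rewrite csnd_cpair, app_nil_r. auto.
Qed.
Lemma list_rev_cons : forall x l, list_rev (S (cpair x (enc_list l))) = enc_list (rev l ++ [x]).
Proof. intros. apply (list_rev_enc (x :: l)). Qed.
Lemma list_nth_cons : forall i x l, list_nth i (S (cpair x (enc_list l))) = nth i (x :: l) 0.
Proof. intros. apply (list_nth_enc i (x :: l)). Qed.
Lemma list_nth_0 : forall i, list_nth i 0 = nth i (@nil nat) 0.
Proof. intros. apply (list_nth_enc i []). Qed.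
Arguments list_nth : simpl never.
Arguments list_rev : simpl never.

Definition tHd : tcode :=
  tcode_ext (tComp tFst [tComp tPred [tProj 0]])
    (fun xs => list_hd (nth 0 xs 0)) (fun _ => eq_refl).
Definition tTl : tcode :=
  tcode_ext (tComp tSnd [tComp tPred [tProj 0]])
    (fun xs => list_tl (nth 0 xs 0)) (fun _ => eq_refl).
Definition tNth : tcode :=
  tcode_ext (tComp tHd [tComp (tIter tTl) [tProj 0; tProj 1]])
    (fun xs => list_nth (nth 0 xs 0) (nth 1 xs 0)) (fun _ => eq_refl).

Definition Fst (e : tcode) : tcode := tComp tFst [e].
Definition Snd (e : tcode) : tcode := tComp tSnd [e].
Definition Pair (a b : tcode) : tcode := tComp tPair [a; b].
Definition Succ (e : tcode) : tcode := tComp tSucc [e].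
Definition Hd (e : tcode) : tcode := tComp tHd [e].
Definition Tl (e : tcode) : tcode := tComp tTl [e].
Definition IfZero (c a b : tcode) : tcode := tComp tIfZero [c; a; b].
Definition IfEq (a b x y : tcode) : tcode := tComp tIfEq [a; b; x; y].
Definition Nth (i l : tcode) : tcode := tComp tNth [i; l].

Definition tRevStep : tcode :=
  IfZero (Fst (tProj 0)) (tProj 0) (Pair (Tl (Fst (tProj 0))) (Succ (Pair (Hd (Fst (tProj 0))) (Snd (tProj 0))))).
Definition tRev : tcode :=
  tcode_ext (Snd (tComp (tIter tRevStep) [tProj 0; Pair (tProj 0) (tConst 0)]))
    (fun xs => list_rev (nth 0 xs 0)) (fun _ => eq_refl).
Definition Rev (e : tcode) : tcode := tComp tRev [e].

(** * A primitive recursive step function *)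

Fixpoint enc_code (c : code) : nat :=
  match c with
  | cZero => cpair 0 0 | cSucc => cpair 1 0 | cProj i => cpair 2 i
  | cComp f gs => cpair 3 (cpair (enc_code f) (enc_list (map enc_code gs)))
  | cPrec f g => cpair 4 (cpair (enc_code f) (enc_code g))
  | cMin f => cpair 5 (enc_code f)
  end.

Definition enc_frame (F : frame) : nat :=
  match F with
  | FComp f rest xs acc =>
      cpair 0 (cpair (enc_code f) (cpair (enc_list (map enc_code rest)) (cpair (enc_list xs) (enc_list acc))))
  | FPrec g i n xs => cpair 1 (cpair (enc_code g) (cpair i (cpair n (enc_list xs))))
  | FMin f n xs => cpair 2 (cpair (enc_code f) (cpair n (enc_list xs)))
  end.

Definition enc_state (s : state) : nat :=
  match s with
  | Call c xs K => cpair 0 (cpair (enc_code c) (cpair (enc_list xs) (enc_list (map enc_frame K))))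
  | Ret v K => cpair 1 (cpair v (enc_list (map enc_frame K)))
  end.

Definition ret_num (v K : nat) : nat := cpair 1 (cpair v K).
Definition call_num (c xs K : nat) : nat := cpair 0 (cpair c (cpair xs K)).
Definition comp_frame_num (f r xs acc : nat) : nat := cpair 0 (cpair f (cpair r (cpair xs acc))).
Definition prec_frame_num (g i n xs : nat) : nat := cpair 1 (cpair g (cpair i (cpair n xs))).
Definition min_frame_num (f n xs : nat) : nat := cpair 2 (cpair f (cpair n xs)).
Definition cons_num (a b : nat) : nat := S (cpair a b).

Definition step_call_num (n : nat) : nat :=
  let body := csnd n in let c := cfst body in let xs := cfst (csnd body) in let K := csnd (csnd body) in
  let ct := cfst c in let ca := csnd c in
  if Nat.eqb ct 0 then ret_num 0 K else
  if Nat.eqb ct 1 then ret_num (S (list_hd xs)) K else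
  if Nat.eqb ct 2 then ret_num (list_nth ca xs) K else
  if Nat.eqb ct 3 then
    match csnd ca with
    | 0 => call_num (cfst ca) 0 K
    | S _ => call_num (list_hd (csnd ca)) xs
               (cons_num (comp_frame_num (cfst ca) (list_tl (csnd ca)) xs 0) K)
    end else
  if Nat.eqb ct 4 then
    match xs with
    | 0 => n
    | S _ => call_num (cfst ca) (list_tl xs)
               (cons_num (prec_frame_num (csnd ca) 0 (list_hd xs) (list_tl xs)) K)
    end else
  if Nat.eqb ct 5 then call_num ca (cons_num 0 xs) (cons_num (min_frame_num ca 0 xs) K) else n.

Definition step_ret_num (n : nat) : nat :=
  let body := csnd n in let v := cfst body in let frames := csnd body in
  match frames with
  | 0 => n
  | S _ =>
    let fr := list_hd frames in let rest := list_tl frames in let ft := cfst fr in let fa := csnd fr in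
    if Nat.eqb ft 0 then
      match cfst (csnd fa) with
      | 0 => call_num (cfst fa) (list_rev (cons_num v (csnd (csnd (csnd fa))))) rest
      | S _ => call_num (list_hd (cfst (csnd fa))) (cfst (csnd (csnd fa)))
                 (cons_num (comp_frame_num (cfst fa) (list_tl (cfst (csnd fa))) (cfst (csnd (csnd fa)))
                              (cons_num v (csnd (csnd (csnd fa))))) rest)
      end
    else if Nat.eqb ft 1 then
      if Nat.eqb (cfst (csnd fa)) (cfst (csnd (csnd fa))) then ret_num v rest
      else call_num (cfst fa) (cons_num (cfst (csnd fa)) (cons_num v (csnd (csnd (csnd fa)))))
             (cons_num (prec_frame_num (cfst fa) (S (cfst (csnd fa))) (cfst (csnd (csnd fa)))
                          (csnd (csnd (csnd fa)))) rest)
    else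
      match v with
      | 0 => ret_num (cfst (csnd fa)) rest
      | S _ => call_num (cfst fa) (cons_num (S (cfst (csnd fa))) (csnd (csnd fa)))
                 (cons_num (min_frame_num (cfst fa) (S (cfst (csnd fa))) (csnd (csnd fa))) rest)
      end
  end.

Definition step_num (n : nat) : nat := match cfst n with 0 => step_call_num n | S _ => step_ret_num n end.

Arguments ret_num : simpl never.
Arguments call_num : simpl never.
Arguments comp_frame_num : simpl never.
Arguments prec_frame_num : simpl never.
Arguments min_frame_num : simpl never.
Arguments cons_num : simpl never.
Arguments step_call_num : simpl never.
Arguments step_ret_num : simpl never.
Arguments step_num : simpl never.

Ltac simpl_cpair := repeat (first [rewrite cfst_cpair | rewrite csnd_cpair]).
Ltac finish_step_num :=
  unfold ret_num, call_num, cons_num, comp_frame_num, prec_frame_num, min_frame_num; simpl;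
  rewrite ?cfst_cpair, ?csnd_cpair, ?list_hd_cons, ?list_tl_cons, ?list_rev_cons,
    ?list_nth_cons, ?list_nth_0, ?list_hd_0, ?list_tl_0;
  try reflexivity.

Lemma step_num_spec : forall s, step_num (enc_state s) = enc_state (step s).
Proof.
  intros [c xs K | v K].
  - unfold step_num. simpl enc_state. rewrite cfst_cpair.
    unfold step_call_num. cbv zeta. rewrite !csnd_cpair, !cfst_cpair.
    destruct c as [ | | i | f gs | f g | f ]; simpl enc_code; simpl_cpair; simpl Nat.eqb; cbv iota beta.
    + reflexivity.
    + destruct xs; finish_step_num.
    + rewrite list_nth_enc. finish_step_num.
    + destruct gs; finish_step_num.
    + destruct xs; finish_step_num.
    + finish_step_num.
  - unfold step_num. simpl enc_state. rewrite cfst_cpair.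
    unfold step_ret_num. cbv zeta. rewrite !csnd_cpair, !cfst_cpair.
    destruct K as [|F K]; simpl enc_list; cbv iota beta; [reflexivity|].
    rewrite list_hd_cons, list_tl_cons.
    destruct F as [f rest xs acc | g i n xs | f n xs]; simpl enc_frame; simpl_cpair; simpl Nat.eqb; cbv iota beta.
    + destruct rest; finish_step_num.
    + destruct (Nat.eqb i n); finish_step_num.
    + destruct v; finish_step_num.
Qed.

Definition tRetNum : tcode :=
  tcode_ext (Pair (tConst 1) (Pair (tProj 0) (tProj 1)))
    (fun xs => ret_num (nth 0 xs 0) (nth 1 xs 0)) (fun _ => eq_refl).
Definition tCallNum : tcode :=
  tcode_ext (Pair (tConst 0) (Pair (tProj 0) (Pair (tProj 1) (tProj 2))))
    (fun xs => call_num (nth 0 xs 0) (nth 1 xs 0) (nth 2 xs 0)) (fun _ => eq_refl).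
Definition tCompFrame : tcode :=
  tcode_ext (Pair (tConst 0) (Pair (tProj 0) (Pair (tProj 1) (Pair (tProj 2) (tProj 3)))))
    (fun xs => comp_frame_num (nth 0 xs 0) (nth 1 xs 0) (nth 2 xs 0) (nth 3 xs 0)) (fun _ => eq_refl).
Definition tPrecFrame : tcode :=
  tcode_ext (Pair (tConst 1) (Pair (tProj 0) (Pair (tProj 1) (Pair (tProj 2) (tProj 3)))))
    (fun xs => prec_frame_num (nth 0 xs 0) (nth 1 xs 0) (nth 2 xs 0) (nth 3 xs 0)) (fun _ => eq_refl).
Definition tMinFrame : tcode :=
  tcode_ext (Pair (tConst 2) (Pair (tProj 0) (Pair (tProj 1) (tProj 2))))
    (fun xs => min_frame_num (nth 0 xs 0) (nth 1 xs 0) (nth 2 xs 0)) (fun _ => eq_refl).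
Definition tConsNum : tcode :=
  tcode_ext (Succ (Pair (tProj 0) (tProj 1)))
    (fun xs => cons_num (nth 0 xs 0) (nth 1 xs 0)) (fun _ => eq_refl).

Definition RetNum (a b : tcode) : tcode := tComp tRetNum [a; b].
Definition CallNum (a b c : tcode) : tcode := tComp tCallNum [a; b; c].
Definition CompFrame (a b c d : tcode) : tcode := tComp tCompFrame [a; b; c; d].
Definition PrecFrame (a b c d : tcode) : tcode := tComp tPrecFrame [a; b; c; d].
Definition MinFrame (a b c : tcode) : tcode := tComp tMinFrame [a; b; c].
Definition ConsNum (a b : tcode) : tcode := tComp tConsNum [a; b].

Section StepCode.
Let Arg : tcode := tProj 0.
Let Body : tcode := Snd Arg.
Let Args : tcode := Fst (Snd Body).
Let Stack : tcode := Snd (Snd Body).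
Let Tag : tcode := Fst (Fst Body).
Let Data : tcode := Snd (Fst Body).
Definition tStepCall0 : tcode :=
  IfEq Tag (tConst 0) (RetNum (tConst 0) Stack)
  (IfEq Tag (tConst 1) (RetNum (Succ (Hd Args)) Stack)
  (IfEq Tag (tConst 2) (RetNum (Nth Data Args) Stack)
  (IfEq Tag (tConst 3)
     (IfZero (Snd Data) (CallNum (Fst Data) (tConst 0) Stack)
        (CallNum (Hd (Snd Data)) Args (ConsNum (CompFrame (Fst Data) (Tl (Snd Data)) Args (tConst 0)) Stack)))
  (IfEq Tag (tConst 4)
     (IfZero Args Arg
        (CallNum (Fst Data) (Tl Args) (ConsNum (PrecFrame (Snd Data) (tConst 0) (Hd Args) (Tl Args)) Stack)))
  (IfEq Tag (tConst 5) (CallNum Data (ConsNum (tConst 0) Args) (ConsNum (MinFrame Data (tConst 0) Args) Stack))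
   Arg))))).
Let Val : tcode := Fst Body.
Let Frames : tcode := Snd Body.
Let Rest : tcode := Tl Frames.
Let FTag : tcode := Fst (Hd Frames).
Let F1 : tcode := Fst (Snd (Hd Frames)).
Let F2 : tcode := Fst (Snd (Snd (Hd Frames))).
Let F3 : tcode := Fst (Snd (Snd (Snd (Hd Frames)))).
Let F3' : tcode := Snd (Snd (Snd (Hd Frames))).
Let F4 : tcode := Snd (Snd (Snd (Snd (Hd Frames)))).
Definition tStepRet0 : tcode :=
  IfZero Frames Arg
  (IfEq FTag (tConst 0)
     (IfZero F2 (CallNum F1 (Rev (ConsNum Val F4)) Rest)
        (CallNum (Hd F2) F3 (ConsNum (CompFrame F1 (Tl F2) F3 (ConsNum Val F4)) Rest)))
  (IfEq FTag (tConst 1)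
     (IfEq F2 F3 (RetNum Val Rest)
        (CallNum F1 (ConsNum F2 (ConsNum Val F4)) (ConsNum (PrecFrame F1 (Succ F2) F3 F4) Rest)))
     (IfZero Val (RetNum F2 Rest)
        (CallNum F1 (ConsNum (Succ F2) F3') (ConsNum (MinFrame F1 (Succ F2) F3') Rest))))).
End StepCode.

Definition tStepCall : tcode :=
  tcode_ext tStepCall0
    (fun xs => step_call_num (nth 0 xs 0)) (fun _ => eq_refl).
Definition tStepRet : tcode :=
  tcode_ext tStepRet0
    (fun xs => step_ret_num (nth 0 xs 0)) (fun _ => eq_refl).
Definition tStep : tcode :=
  tcode_ext (IfZero (Fst (tProj 0)) (tComp tStepCall [tProj 0]) (tComp tStepRet [tProj 0]))
    (fun xs => step_num (nth 0 xs 0)) (fun _ => eq_refl).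

Definition init_num (e x : nat) : nat := call_num e (cons_num x 0) 0.
Definition out_num (s : nat) : nat :=
  if Nat.eqb (cfst s) 1 then match csnd (csnd s) with 0 => S (cfst (csnd s)) | S _ => 0 end else 0.
(* [run e x t = S y] if code [e] halts on [[x]] within [t] steps with output [y]; [0] otherwise. *)
Definition run (e x t : nat) : nat := out_num (Nat.iter t step_num (init_num e x)).

Lemma iter_step_num : forall t s, Nat.iter t step_num (enc_state s) = enc_state (steps t s).
Proof.
  induction t; intros; auto. rewrite Nat.iter_succ_r, step_num_spec. simpl. auto.
Qed.

Lemma init_num_enc : forall c x, init_num (enc_code c) x = enc_state (Call c [x] []).
Proof. reflexivity. Qed.

Lemma out_num_enc : forall s y, out_num (enc_state s) = S y <-> s = Ret y [].
Proof.
  intros [c xs K | v K] y; unfold out_num; simpl enc_state; rewrite cfst_cpair; simpl.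
  - split; discriminate.
  - rewrite !csnd_cpair, cfst_cpair. destruct K; simpl; split; intros H; inversion H; auto.
Qed.

Theorem run_correct : forall c x y, eval c [x] y <-> exists t, run (enc_code c) x t = S y.
Proof.
  intros. rewrite eval_iff_halts. unfold run. rewrite init_num_enc.
  split; intros [t H]; exists t; rewrite iter_step_num in *; apply out_num_enc; auto.
Qed.

Lemma step_num_halted : forall s, cfst s = 1 -> csnd (csnd s) = 0 -> step_num s = s.
Proof.
  intros. unfold step_num. rewrite H. unfold step_ret_num. cbv zeta. rewrite H0. auto.
Qed.

Lemma run_mono : forall e x t t' y, run e x t = S y -> t <= t' -> run e x t' = S y.
Proof.
  unfold run, out_num. intros e x t t' y H Ht.
  destruct (Nat.eqb_spec (cfst (Nat.iter t step_num (init_num e x))) 1) as [E|]; [|discriminate].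
  destruct (csnd (csnd (Nat.iter t step_num (init_num e x)))) eqn:E2; [|discriminate].
  replace t' with ((t' - t) + t) by lia. rewrite Nat.iter_add.
  assert (forall k, Nat.iter k step_num (Nat.iter t step_num (init_num e x)) =
                    Nat.iter t step_num (init_num e x)) as ->.
  { induction k; simpl; auto. rewrite IHk. apply step_num_halted; auto. }
  rewrite E, E2. auto.
Qed.

Definition tInit : tcode :=
  tcode_ext (CallNum (tProj 0) (ConsNum (tProj 1) (tConst 0)) (tConst 0))
    (fun xs => init_num (nth 0 xs 0) (nth 1 xs 0)) (fun _ => eq_refl).
Definition tOut : tcode :=
  tcode_ext (IfEq (Fst (tProj 0)) (tConst 1)
      (IfZero (Snd (Snd (tProj 0))) (Succ (Fst (Snd (tProj 0)))) (tConst 0)) (tConst 0))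
    (fun xs => out_num (nth 0 xs 0)) (fun _ => eq_refl).
Definition tRun : tcode :=
  tcode_ext (tComp tOut [tComp (tIter tStep) [tProj 2; tComp tInit [tProj 0; tProj 1]]])
    (fun xs => run (nth 0 xs 0) (nth 1 xs 0) (nth 2 xs 0)) (fun _ => eq_refl).
Arguments run : simpl never.
Definition Run (a b c : tcode) : tcode := tComp tRun [a; b; c].

Fixpoint parity (n : nat) : nat := match n with 0 => 0 | S m => 1 - parity m end.
Fixpoint half (n : nat) : nat := match n with 0 => 0 | S m => half m + parity m end.
Lemma parity_half_double : forall t,
  parity (2 * t) = 0 /\ parity (S (2 * t)) = 1 /\ half (2 * t) = t /\ half (S (2 * t)) = t.
Proof.
  induction t as [|t IH]; [auto|]. replace (2 * S t) with (S (S (2 * t))) by lia.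
  destruct IH as [A [B [C D]]]. cbn [parity half] in *. rewrite A in *. lia.
Qed.

Definition tParity : tcode.
Proof. refine (tcode_ext (tPrec tZero (tComp tSub [tConst 1; tProj 1])) (fun xs => parity (nth 0 xs 0)) _).
  intros; simpl; unfold prec_fun; induction (nth 0 xs 0); simpl; auto. Defined.
Definition tHalf : tcode.
Proof.
  refine (tcode_ext (tPrec tZero (tComp tAdd [tProj 1; tComp tParity [tProj 0]])) (fun xs => half (nth 0 xs 0)) _).
  intros; simpl; unfold prec_fun; induction (nth 0 xs 0); simpl; auto. Defined.

Definition bs_tail_num (m : nat) : nat := half (pred m).
Definition bs_head_num (m : nat) : nat := parity (pred m).

Lemma pred_bs2nat_cons : forall b t, pred (bs2nat (b :: t)) =
  if b then S (2 * bs2nat t) else 2 * bs2nat t.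
Proof. intros [|] t; simpl; lia. Qed.

Lemma bs_tail_num_cons : forall b t, bs_tail_num (bs2nat (b :: t)) = bs2nat t.
Proof. intros. unfold bs_tail_num. rewrite pred_bs2nat_cons. destruct b; apply parity_half_double. Qed.

Lemma bs_head_num_cons : forall b t, bs_head_num (bs2nat (b :: t)) = if b then 1 else 0.
Proof. intros. unfold bs_head_num. rewrite pred_bs2nat_cons. destruct b; apply parity_half_double. Qed.
Arguments bs_tail_num : simpl never.
Arguments bs_head_num : simpl never.

Definition tBsTail : tcode :=
  tcode_ext (tComp tHalf [tComp tPred [tProj 0]])
    (fun xs => bs_tail_num (nth 0 xs 0)) (fun _ => eq_refl).
Definition tBsHead : tcode :=
  tcode_ext (tComp tParity [tComp tPred [tProj 0]])
    (fun xs => bs_head_num (nth 0 xs 0)) (fun _ => eq_refl).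

Lemma bs2nat_inj : forall x y, bs2nat x = bs2nat y -> x = y.
Proof.
  induction x as [|a x IH]; intros [|b y] H; simpl in H.
  - auto.
  - destruct b; lia.
  - destruct a; lia.
  - destruct a, b; try lia; f_equal; apply IH; lia.
Qed.

Lemma bs2nat_surj : forall n, exists x, bs2nat x = n.
Proof.
  intro n. induction n as [n IH] using lt_wf_ind. destruct n. exists []; auto.
  destruct (Nat.Even_or_Odd n) as [[k Hk]|[k Hk]].
  - destruct (IH k ltac:(lia)) as [x Hx]. exists (false :: x). simpl. lia.
  - destruct (IH k ltac:(lia)) as [x Hx]. exists (true :: x). simpl. lia.
Qed.

Lemma bs2nat_len : forall x, length x <= bs2nat x.
Proof. induction x; simpl; auto. destruct a; lia. Qed.

Fixpoint lexrank (p : bitstring) : nat :=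
  match p with [] => 0 | b :: t => (if b then 2 ^ length t else 0) + lexrank t end.

Lemma lexrank_lt : forall p, lexrank p < 2 ^ length p.
Proof. induction p; simpl; auto. destruct a; lia. Qed.

Lemma lex_lt_rank : forall x y, length x = length y -> (lex_lt y x = true <-> lexrank y < lexrank x).
Proof.
  induction x as [|b x IH]; intros [|a y] H; simpl in *; try (split; intros; lia || discriminate).
  injection H as H. pose proof (lexrank_lt x). pose proof (lexrank_lt y). rewrite H in *.
  destruct a, b; simpl; rewrite ?IH by auto; split; intros; try lia; try discriminate; auto.
Qed.

Lemma lexrank_inj : forall x y, length x = length y -> lexrank x = lexrank y -> x = y.
Proof.
  induction x as [|b x IH]; intros [|a y] H E; simpl in *; try discriminate; auto.
  injection H as H. pose proof (lexrank_lt x). pose proof (lexrank_lt y). rewrite H in *.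
  destruct a, b; f_equal; try (apply IH; auto; lia); lia.
Qed.

Lemma lexrank_exists : forall L r, r < 2 ^ L -> exists p, length p = L /\ lexrank p = r.
Proof.
  induction L; intros r Hr.
  - exists []. simpl in *. split; auto; lia.
  - simpl in Hr. destruct (Nat.lt_ge_cases r (2 ^ L)).
    + destruct (IHL r H) as [p [A B]]. exists (false :: p). simpl. auto.
    + destruct (IHL (r - 2 ^ L) ltac:(lia)) as [p [A B]]. exists (true :: p). simpl. rewrite A. lia.
Qed.

Definition len_rank_step (s : nat) : nat :=
  match cfst s with
  | 0 => s
  | S _ => cpair (bs_tail_num (cfst s))
             (cpair (cfst (csnd s) + cfst (csnd s) + bs_head_num (cfst s)) (S (csnd (csnd s))))
  end.
Definition len_rank (m : nat) : nat := Nat.iter m len_rank_step (cpair m (cpair 0 0)).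
Definition bs_length_num (m : nat) : nat := csnd (csnd (len_rank m)).
Definition bs_rank_num (m : nat) : nat := cfst (csnd (len_rank m)).

Lemma len_rank_step_cons : forall b p acc len,
  len_rank_step (cpair (bs2nat (b :: p)) (cpair acc len)) =
  cpair (bs2nat p) (cpair (acc + acc + (if b then 1 else 0)) (S len)).
Proof.
  intros. unfold len_rank_step. rewrite cfst_cpair. destruct (bs2nat (b :: p)) eqn:E. { simpl in E; destruct b; lia. }
  rewrite <- E, !csnd_cpair, !cfst_cpair, bs_tail_num_cons, bs_head_num_cons. auto.
Qed.

Lemma len_rank_step_iter : forall p acc len n, length p <= n ->
  Nat.iter n len_rank_step (cpair (bs2nat p) (cpair acc len)) =
  cpair 0 (cpair (acc * 2 ^ length p + lexrank p) (len + length p)).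
Proof.
  induction p as [|b p IH]; intros acc len n Hn.
  - simpl. clear Hn. rewrite Nat.mul_1_r, !Nat.add_0_r. induction n; simpl; auto.
    rewrite IHn. unfold len_rank_step. rewrite cfst_cpair. auto.
  - destruct n as [|n]; simpl in Hn; [lia|]. rewrite Nat.iter_succ_r.
    rewrite len_rank_step_cons, IH by lia.
    f_equal. f_equal. 2: simpl; lia. simpl. destruct b; ring.
Qed.

Lemma bs_length_num_spec : forall p, bs_length_num (bs2nat p) = length p.
Proof.
  intros. unfold bs_length_num, len_rank. rewrite len_rank_step_iter by apply bs2nat_len.
  rewrite !csnd_cpair. auto.
Qed.
Lemma bs_rank_num_spec : forall p, bs_rank_num (bs2nat p) = lexrank p.
Proof.
  intros. unfold bs_rank_num, len_rank. rewrite len_rank_step_iter by apply bs2nat_len.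
  rewrite csnd_cpair, cfst_cpair. auto.
Qed.
Arguments bs_length_num : simpl never.
Arguments bs_rank_num : simpl never.

Definition tLenRankStep : tcode :=
  tcode_ext (IfZero (Fst (tProj 0)) (tProj 0) (Pair (tComp tBsTail [Fst (tProj 0)])
      (Pair (tComp tAdd [tComp tAdd [Fst (Snd (tProj 0)); Fst (Snd (tProj 0))]; tComp tBsHead [Fst (tProj 0)]])
            (Succ (Snd (Snd (tProj 0)))))))
    (fun xs => len_rank_step (nth 0 xs 0)) (fun _ => eq_refl).
Definition tLenRank : tcode :=
  tcode_ext (tComp (tIter tLenRankStep) [tProj 0; Pair (tProj 0) (Pair (tConst 0) (tConst 0))])
    (fun xs => len_rank (nth 0 xs 0)) (fun _ => eq_refl).
Definition tBsLength : tcode :=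
  tcode_ext (Snd (Snd (tComp tLenRank [tProj 0])))
    (fun xs => bs_length_num (nth 0 xs 0)) (fun _ => eq_refl).
Definition tBsRank : tcode :=
  tcode_ext (Fst (Snd (tComp tLenRank [tProj 0])))
    (fun xs => bs_rank_num (nth 0 xs 0)) (fun _ => eq_refl).

Definition prog (k : nat) (w : bitstring) : bitstring := repeat true k ++ false :: w.

Lemma length_prog : forall k w, length (prog k w) = k + S (length w).
Proof. intros. unfold prog. rewrite length_app, repeat_length. reflexivity. Qed.

Definition parse_step (s : nat) : nat :=
  match cfst s with
  | 0 => s
  | S _ => match bs_head_num (cfst s) with 0 => s | S _ => cpair (bs_tail_num (cfst s)) (S (csnd s)) end
  end.
Definition parse_prog (m : nat) : nat := Nat.iter m parse_step (cpair m 0).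
Definition prog_valid (m : nat) : nat := cfst (parse_prog m).
Definition prog_index (m : nat) : nat := csnd (parse_prog m).
Definition prog_input (m : nat) : nat := bs_tail_num (cfst (parse_prog m)).

Lemma parse_step_true : forall p k0, parse_step (cpair (bs2nat (true :: p)) k0) = cpair (bs2nat p) (S k0).
Proof.
  intros. unfold parse_step. rewrite cfst_cpair. destruct (bs2nat (true :: p)) eqn:E. { simpl in E; lia. }
  rewrite <- E, bs_head_num_cons, bs_tail_num_cons, csnd_cpair. auto.
Qed.

Lemma parse_step_false : forall p k0, parse_step (cpair (bs2nat (false :: p)) k0) = cpair (bs2nat (false :: p)) k0.
Proof.
  intros. unfold parse_step. rewrite cfst_cpair. destruct (bs2nat (false :: p)) eqn:E; auto.
  rewrite <- E, bs_head_num_cons. auto.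
Qed.

Lemma parse_step_iter : forall k w k0 n, k < n ->
  Nat.iter n parse_step (cpair (bs2nat (prog k w)) k0) = cpair (bs2nat (false :: w)) (k0 + k).
Proof.
  induction k; intros w k0 n Hn.
  - change (prog 0 w) with (false :: w). rewrite Nat.add_0_r. clear Hn.
    induction n; [reflexivity|]. rewrite Nat.iter_succ_r, parse_step_false. exact IHn.
  - destruct n as [|n]; [lia|]. rewrite Nat.iter_succ_r.
    change (prog (S k) w) with (true :: prog k w).
    rewrite parse_step_true, IHk by lia. f_equal. lia.
Qed.

Lemma parse_prog_spec : forall k w, parse_prog (bs2nat (prog k w)) = cpair (bs2nat (false :: w)) k.
Proof.
  intros. unfold parse_prog. apply parse_step_iter.
  pose proof (bs2nat_len (prog k w)). rewrite length_prog in H. lia.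
Qed.

Lemma prog_fields : forall k w, let m := bs2nat (prog k w) in
  prog_valid m <> 0 /\ prog_index m = k /\ prog_input m = bs2nat w.
Proof.
  intros. subst m. unfold prog_valid, prog_index, prog_input.
  rewrite parse_prog_spec, cfst_cpair, csnd_cpair, bs_tail_num_cons. simpl. split; [lia|auto].
Qed.
Arguments prog_valid : simpl never.
Arguments prog_index : simpl never.
Arguments prog_input : simpl never.

Definition tParseStep : tcode :=
  tcode_ext (IfZero (Fst (tProj 0)) (tProj 0) (IfZero (tComp tBsHead [Fst (tProj 0)]) (tProj 0)
    (Pair (tComp tBsTail [Fst (tProj 0)]) (Succ (Snd (tProj 0))))))
    (fun xs => parse_step (nth 0 xs 0)) (fun _ => eq_refl).
Definition tParseProg : tcode :=
  tcode_ext (tComp (tIter tParseStep) [tProj 0; Pair (tProj 0) (tConst 0)])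
    (fun xs => parse_prog (nth 0 xs 0)) (fun _ => eq_refl).
Definition tProgValid : tcode :=
  tcode_ext (Fst (tComp tParseProg [tProj 0]))
    (fun xs => prog_valid (nth 0 xs 0)) (fun _ => eq_refl).
Definition tProgIndex : tcode :=
  tcode_ext (Snd (tComp tParseProg [tProj 0]))
    (fun xs => prog_index (nth 0 xs 0)) (fun _ => eq_refl).
Definition tProgInput : tcode :=
  tcode_ext (tComp tBsTail [Fst (tComp tParseProg [tProj 0])])
    (fun xs => prog_input (nth 0 xs 0)) (fun _ => eq_refl).

Definition prog_num (k w : nat) : nat := Nat.iter k (fun v => v + v + 2) (w + w + 1).

Lemma prog_num_spec : forall k w, prog_num k (bs2nat w) = bs2nat (prog k w).
Proof. unfold prog. induction k; intros; simpl; auto. unfold prog_num in *. rewrite IHk. simpl. lia. Qed.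
Arguments prog_num : simpl never.

Definition tProgNum : tcode :=
  tcode_ext (tComp (tIter (tComp tAdd [tComp tAdd [tProj 0; tProj 0]; tConst 2]))
    [tProj 0; tComp tAdd [tComp tAdd [tProj 1; tProj 1]; tConst 1]])
    (fun xs => prog_num (nth 0 xs 0) (nth 1 xs 0)) (fun _ => eq_refl).

Definition machine_of (c : code) : machine := fun x =>
  match excluded_middle_informative (exists y, eval c [bs2nat x] (bs2nat y)) with
  | left H => Some (proj1_sig (constructive_indefinite_description _ H))
  | right _ => None
  end.

Lemma machine_of_spec : forall c x y, machine_of c x = Some y <-> eval c [bs2nat x] (bs2nat y).
Proof.
  intros. unfold machine_of. destruct excluded_middle_informative as [H|H].
  - destruct (constructive_indefinite_description _ H) as [z Hz]. simpl. split.
    + intros E; inversion E; subst; auto.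
    + intros E. f_equal. apply bs2nat_inj. eapply eval_deterministic; eauto.
  - split; intros E; [discriminate|]. exfalso; eauto.
Qed.

Lemma machine_of_computable : forall c, partial_computable (machine_of c).
Proof. intros c. exists c. intros. apply machine_of_spec. Qed.

Lemma ex_least : forall P : nat -> Prop, (exists n, P n) -> exists n, P n /\ forall m, P m -> n <= m.
Proof.
  intros P [n Hn]. induction n as [n IH] using lt_wf_ind.
  destruct (classic (exists m, m < n /\ P m)) as [[m [Hm Pm]]|H].
  - apply (IH m Hm Pm).
  - exists n. split; auto. intros m Pm. destruct (Nat.lt_ge_cases m n); auto. exfalso; eauto.
Qed.

Lemma eval_min_tcode : forall (T : tcode) xs n,
  eval (cMin (tc_code T)) xs n <-> tc_fun T (n :: xs) = 0 /\ forall j, j < n -> tc_fun T (j :: xs) <> 0.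
Proof.
  intros. split.
  - intros H. inversion H as [| | | | | |f xs' n' H0 Hlt]; subst. split.
    + eapply eval_deterministic. apply tc_eval. auto.
    + intros j Hj E. destruct (Hlt j Hj) as [k Hk].
      pose proof (eval_deterministic _ _ _ _ (tc_eval T (j :: xs)) Hk). lia.
  - intros [A B]. constructor. rewrite <- A. apply tc_eval.
    intros j Hj. destruct (tc_fun T (j :: xs)) eqn:E. { exfalso; eapply B; eauto. }
    exists n0. rewrite <- E. apply tc_eval.
Qed.

Lemma eval_comp_inv : forall f gs xs y, eval (cComp f gs) xs y -> exists ys, evals gs xs ys /\ eval f ys y.
Proof. intros. inversion H; subst; eauto. Qed.
Lemma evals_cons_inv : forall g gs xs ys, evals (g :: gs) xs ys ->
  exists y ys', ys = y :: ys' /\ eval g xs y /\ evals gs xs ys'.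
Proof. intros. inversion H; subst; eauto. Qed.
Lemma evals_nil_inv : forall xs ys, evals [] xs ys -> ys = [].
Proof. intros. inversion H; subst; eauto. Qed.
Lemma eval_proj_inv : forall i xs y, eval (cProj i) xs y -> y = nth i xs 0.
Proof. intros. inversion H; subst; eauto. Qed.

Lemma eval_search_spec : forall f (T : tcode) m y, eval (cComp f [cMin (tc_code T); cProj 0]) [m] y <->
  exists s, tc_fun T [s; m] = 0 /\ (forall j, j < s -> tc_fun T [j; m] <> 0) /\ eval f [s; m] y.
Proof.
  intros. split.
  - intros H. apply eval_comp_inv in H as [ys [Hs Hf]].
    apply evals_cons_inv in Hs as [s [ys1 [-> [Hm Hs]]]].
    apply evals_cons_inv in Hs as [m' [ys2 [-> [Hp Hs]]]].
    apply evals_nil_inv in Hs; subst. apply eval_proj_inv in Hp. simpl in Hp; subst.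
    apply eval_min_tcode in Hm as [A B]. eauto.
  - intros [s [A [B C]]]. econstructor; [|exact C].
    constructor. apply eval_min_tcode. split; [exact A|exact B].
    constructor. apply (ev_proj 0). constructor.
Qed.

(** * A left-total optimal machine *)

Definition u0_run (m t : nat) : nat :=
  match prog_valid m with 0 => 0 | S _ => run (prog_index m) (prog_input m) t end.

Definition tU0Run : tcode :=
  tcode_ext (IfZero (tComp tProgValid [tProj 0]) (tConst 0)
    (Run (tComp tProgIndex [tProj 0]) (tComp tProgInput [tProj 0]) (tProj 1)))
    (fun xs => u0_run (nth 0 xs 0) (nth 1 xs 0)) (fun _ => eq_refl).

Lemma u0_run_mono : forall q t t' y, u0_run q t = S y -> t <= t' -> u0_run q t' = S y.
Proof. unfold u0_run. intros. destruct (prog_valid q); [discriminate|]. eapply run_mono; eauto. Qed.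

Lemma u0_run_prog : forall k w t, u0_run (bs2nat (prog k w)) t = run k (bs2nat w) t.
Proof.
  intros. unfold u0_run. destruct (prog_fields k w) as [A [B C]].
  destruct (prog_valid _); [lia|]. rewrite B, C. auto.
Qed.

Definition halts_at (q t : nat) : Prop := u0_run q t <> 0 /\ (t = 0 \/ u0_run q (pred t) = 0).

Lemma halts_at_unique : forall q t1 t2, halts_at q t1 -> halts_at q t2 -> t1 = t2.
Proof.
  intros q t1 t2 H1 H2.
  assert (forall a b, halts_at q a -> halts_at q b -> a < b -> False).
  { intros a b [Aa _] [_ [Bb|Bb]] L; [lia|]. destruct (u0_run q a) eqn:E; [contradiction|].
    pose proof (u0_run_mono q a (pred b) n E ltac:(lia)). lia. }
  destruct (Nat.lt_total t1 t2) as [L|[L|L]]; auto; exfalso; eauto.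
Qed.

Lemma halts_at_first : forall q t z, u0_run q t = S z -> exists t0, halts_at q t0 /\ u0_run q t0 = S z.
Proof.
  intros q t z Ht.
  destruct (ex_least (fun t => u0_run q t <> 0)) as [t0 [A0 B0]]. { exists t. lia. }
  destruct (u0_run q t0) as [|z0] eqn:Ez; [contradiction|].
  exists t0. split.
  - split; [lia|]. destruct t0 as [|t1]; auto. right. simpl.
    destruct (u0_run q t1) eqn:E; auto. specialize (B0 t1 ltac:(lia)). lia.
  - pose proof (u0_run_mono _ _ (t0 + t) _ Ez ltac:(lia)).
    pose proof (u0_run_mono _ _ (t0 + t) _ Ht ltac:(lia)). congruence.
Qed.

Definition exact_halt_num (L s : nat) : nat :=
  if Nat.eqb (bs_length_num (cfst s)) L then
    match u0_run (cfst s) (csnd s) with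
    | 0 => 0
    | S _ => match csnd s with
             | 0 => 1
             | S _ => match u0_run (cfst s) (pred (csnd s)) with 0 => 1 | S _ => 0 end
             end
    end
  else 0.

Fixpoint exact_halt_count (L s : nat) : nat :=
  match s with 0 => exact_halt_num L 0 | S j => exact_halt_count L j + exact_halt_num L (S j) end.

Definition tExactHalt : tcode :=
  tcode_ext (IfEq (tComp tBsLength [Fst (tProj 1)]) (tProj 0)
    (IfZero (tComp tU0Run [Fst (tProj 1); Snd (tProj 1)]) (tConst 0)
    (IfZero (Snd (tProj 1)) (tConst 1)
    (IfZero (tComp tU0Run [Fst (tProj 1); tComp tPred [Snd (tProj 1)]]) (tConst 1) (tConst 0))))
    (tConst 0))
    (fun xs => exact_halt_num (nth 0 xs 0) (nth 1 xs 0)) (fun _ => eq_refl).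

Definition tExactHaltCount : tcode.
Proof. refine (tcode_ext (tComp (tPrec (tComp tExactHalt [tProj 0; tConst 0])
    (tComp tAdd [tProj 1; tComp tExactHalt [tProj 2; Succ (tProj 0)]])) [tProj 1; tProj 0])
  (fun xs => exact_halt_count (nth 0 xs 0) (nth 1 xs 0)) _).
  intros. simpl. unfold prec_fun. simpl. induction (nth 1 xs 0); simpl; auto. Defined.
Arguments exact_halt_num : simpl never.

Lemma exact_halt_num_01 : forall L s, exact_halt_num L s = 0 \/ exact_halt_num L s = 1.
Proof.
  intros. unfold exact_halt_num. destruct (_ =? _); auto. destruct (u0_run _ _); auto.
  destruct (csnd s); auto. destruct (u0_run _ _); auto.
Qed.

Lemma exact_halt_num_1 : forall L s,
  exact_halt_num L s = 1 <-> bs_length_num (cfst s) = L /\ halts_at (cfst s) (csnd s).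
Proof.
  intros. unfold exact_halt_num, halts_at. remember (cfst s) as q. remember (csnd s) as t.
  destruct (Nat.eqb_spec (bs_length_num q) L); [|split; [discriminate| intros [H _]; contradiction]].
  destruct (u0_run q t) eqn:E1.
  - split; [discriminate|]. intros [_ [H _]]. contradiction.
  - destruct t as [|t'].
    + split; [intros _; split; [auto|split; [lia|auto]] | auto].
    + simpl pred. destruct (u0_run q t') eqn:E2.
      * split; [intros _; split; [auto|split; [lia|right; auto]] | auto].
      * split; [discriminate|]. intros [_ [_ [H|H]]]; lia.
Qed.

Lemma exact_halt_count_mono : forall L j s, j <= s -> exact_halt_count L j <= exact_halt_count L s.
Proof. intros L j s H. induction H; simpl; lia. Qed.

Lemma exact_halt_count_strict : forall L j s, j < s -> exact_halt_num L s = 1 ->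
  exact_halt_count L j < exact_halt_count L s.
Proof.
  intros L j s H G. destruct s as [|s']; [lia|]. simpl. rewrite G.
  pose proof (exact_halt_count_mono L j s' ltac:(lia)). lia.
Qed.

Lemma exact_halt_count_ivt : forall L r s, r < exact_halt_count L s ->
  exists s', s' <= s /\ exact_halt_num L s' = 1 /\ exact_halt_count L s' = S r.
Proof.
  intros L r s. induction s; intros H.
  - simpl in H. destruct (exact_halt_num_01 L 0) as [E|E]; rewrite E in H; [lia|].
    exists 0. simpl. rewrite E. split; [lia|split; [auto|lia]].
  - simpl in H. destruct (Nat.lt_ge_cases r (exact_halt_count L s)).
    + destruct (IHs H0) as [s' [A B]]. exists s'. split; auto.
    + destruct (exact_halt_num_01 L (S s)) as [E|E]; rewrite E in H; [lia|].
      exists (S s). split; auto. split; auto. simpl. rewrite E. lia.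
Qed.

Lemma exact_halt_count_filter : forall L s,
  exact_halt_count L s = length (filter (fun j => Nat.eqb (exact_halt_num L j) 1) (seq 0 (S s))).
Proof.
  intros L s. induction s.
  - simpl. destruct (exact_halt_num_01 L 0) as [E|E]; rewrite E; auto.
  - rewrite seq_S, filter_app, length_app, <- IHs. simpl.
    destruct (exact_halt_num_01 L (S s)) as [E|E]; rewrite E; simpl; lia.
Qed.

Lemma exact_halt_num_rank_inj : forall L a b, exact_halt_num L a = 1 -> exact_halt_num L b = 1 ->
  bs_rank_num (cfst a) = bs_rank_num (cfst b) -> a = b.
Proof.
  intros L a b Ha Hb E.
  apply exact_halt_num_1 in Ha as [La Ha]. apply exact_halt_num_1 in Hb as [Lb Hb].
  destruct (bs2nat_surj (cfst a)) as [qa Qa]. destruct (bs2nat_surj (cfst b)) as [qb Qb].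
  rewrite <- Qa in La, E, Ha. rewrite <- Qb in Lb, E, Hb.
  rewrite bs_length_num_spec in La, Lb. rewrite !bs_rank_num_spec in E.
  assert (qa = qb) by (apply lexrank_inj; auto; lia). subst qb.
  pose proof (halts_at_unique _ _ _ Ha Hb).
  rewrite <- (cpair_surj a), <- (cpair_surj b). congruence.
Qed.

(* Distinct exact halting pairs of length [L] have distinct programs, and there are [2 ^ L] of those. *)
Lemma exact_halt_count_bound : forall L s, exact_halt_count L s <= 2 ^ L.
Proof.
  intros. rewrite exact_halt_count_filter. set (l := filter _ _).
  rewrite <- (length_map (fun j => bs_rank_num (cfst j)) l), <- (length_seq (2 ^ L) 0).
  apply NoDup_incl_length.
  - apply NoDup_map_NoDup_ForallPairs; [|apply NoDup_filter, seq_NoDup].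
    intros a b Ha Hb E. subst l. apply filter_In in Ha as [_ Ha]. apply filter_In in Hb as [_ Hb].
    apply Nat.eqb_eq in Ha, Hb. eapply exact_halt_num_rank_inj; eauto.
  - intros y Hy. apply in_map_iff in Hy as [a [<- Ha]]. subst l. apply filter_In in Ha as [_ Ha].
    apply Nat.eqb_eq, exact_halt_num_1 in Ha as [La _].
    destruct (bs2nat_surj (cfst a)) as [qa Qa]. rewrite <- Qa in *.
    rewrite bs_length_num_spec in La. rewrite bs_rank_num_spec.
    apply in_seq. pose proof (lexrank_lt qa). subst L. lia.
Qed.

Lemma exact_halt_num_le_count : forall L s, exact_halt_num L s <= exact_halt_count L s.
Proof. intros. destruct s; simpl; lia. Qed.

(* [u_test s m = 0] iff [s] is the [(rank m + 1)]-th exact halting pair of length [|m|]. *)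
Definition u_test (s m : nat) : nat :=
  if Nat.eqb (exact_halt_num (bs_length_num m) s) 1 then
    (if Nat.eqb (exact_halt_count (bs_length_num m) s) (S (bs_rank_num m)) then 0 else 1)
  else 1.

Definition tUTest : tcode :=
  tcode_ext (IfEq (tComp tExactHalt [tComp tBsLength [tProj 1]; tProj 0]) (tConst 1)
    (IfEq (tComp tExactHaltCount [tComp tBsLength [tProj 1]; tProj 0]) (Succ (tComp tBsRank [tProj 1]))
    (tConst 0) (tConst 1)) (tConst 1))
    (fun xs => u_test (nth 0 xs 0) (nth 1 xs 0)) (fun _ => eq_refl).

Definition tUOut : tcode :=
  tcode_ext (tComp tPred [tComp tU0Run [Fst (tProj 0); Snd (tProj 0)]])
    (fun xs => pred (u0_run (cfst (nth 0 xs 0)) (csnd (nth 0 xs 0)))) (fun _ => eq_refl).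

Definition u_code : code := cComp (tc_code tUOut) [cMin (tc_code tUTest); cProj 0].
Definition u_machine : machine := machine_of u_code.

Lemma u_test_0 : forall s m, u_test s m = 0 <->
  exact_halt_num (bs_length_num m) s = 1 /\ exact_halt_count (bs_length_num m) s = S (bs_rank_num m).
Proof.
  intros. unfold u_test. destruct (Nat.eqb_spec (exact_halt_num (bs_length_num m) s) 1).
  - destruct (Nat.eqb_spec (exact_halt_count (bs_length_num m) s) (S (bs_rank_num m)));
      split; intros; try discriminate; intuition.
  - split; intros; try discriminate. intuition.
Qed.

Lemma u_test_least : forall s m, u_test s m = 0 -> forall j, j < s -> u_test j m <> 0.
Proof.
  intros s m H j Hj E. apply u_test_0 in H as [A B]. apply u_test_0 in E as [C D].
  pose proof (exact_halt_count_strict _ _ _ Hj A). lia.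
Qed.

Lemma u_machine_spec : forall p y, u_machine p = Some y <->
  exists s, u_test s (bs2nat p) = 0 /\ bs2nat y = pred (u0_run (cfst s) (csnd s)).
Proof.
  intros. unfold u_machine, u_code. rewrite machine_of_spec, eval_search_spec. split.
  - intros [s [A [_ C]]]. exists s. split; [exact A|]. eapply eval_deterministic; [exact C|apply tc_eval].
  - intros [s [A B]]. exists s. split; [exact A|split; [exact (u_test_least _ _ A)|]].
    rewrite B. apply (tc_eval tUOut [s; bs2nat p]).
Qed.

Lemma u_machine_dom : forall p, in_dom u_machine p <-> exists s, u_test s (bs2nat p) = 0.
Proof.
  intros. unfold in_dom. split.
  - intros [y H]. apply u_machine_spec in H as [s [A _]]. eauto.
  - intros [s A]. destruct (bs2nat_surj (pred (u0_run (cfst s) (csnd s)))) as [y Hy].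
    exists y. apply u_machine_spec. eauto.
Qed.

Theorem u_machine_left_total : left_total u_machine.
Proof.
  intros x y Hl Hlt Hx. apply u_machine_dom in Hx as [s Hs]. apply u_test_0 in Hs as [A B].
  apply lex_lt_rank in Hlt; auto. rewrite bs_rank_num_spec, bs_length_num_spec in *.
  destruct (exact_halt_count_ivt (length x) (lexrank y) s ltac:(lia)) as [s' [_ [C D]]].
  apply u_machine_dom. exists s'. apply u_test_0. rewrite bs_length_num_spec, bs_rank_num_spec, <- Hl. auto.
Qed.

Lemma u_machine_covers : forall q t x, halts_at (bs2nat q) t -> u0_run (bs2nat q) t = S (bs2nat x) ->
  exists p, length p = length q /\ u_machine p = Some x.
Proof.
  intros q t x Hh Ht. set (s := cpair (bs2nat q) t).
  assert (G : exact_halt_num (length q) s = 1).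
  { apply exact_halt_num_1. unfold s. rewrite cfst_cpair, csnd_cpair, bs_length_num_spec. auto. }
  pose proof (exact_halt_count_bound (length q) s). pose proof (exact_halt_num_le_count (length q) s).
  destruct (lexrank_exists (length q) (exact_halt_count (length q) s - 1) ltac:(lia)) as [p [Lp Rp]].
  exists p. split; auto. apply u_machine_spec. exists s. split.
  - apply u_test_0. rewrite bs_length_num_spec, bs_rank_num_spec, Lp, Rp. split; auto. lia.
  - unfold s. rewrite cfst_cpair, csnd_cpair, Ht. auto.
Qed.

Lemma is_C_exists : forall (U : machine) x p, U p = Some x -> exists m, is_C U x m.
Proof.
  intros U x p Hp.
  destruct (ex_least (fun m => exists p, U p = Some x /\ length p = m)) as [m [Hm Hmin]]; eauto.
  exists m. split; auto. intros q Hq. apply Hmin. eauto.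
Qed.

Theorem u_machine_optimal : optimal u_machine.
Proof.
  intros V [e He]. exists (enc_code e + 1). intros x n [[p [Hp Hlen]] _].
  apply He, run_correct in Hp as [t Ht]. rewrite <- u0_run_prog in Ht.
  destruct (halts_at_first _ _ _ Ht) as [t0 [H0 T0]].
  destruct (u_machine_covers _ _ _ H0 T0) as [p' [Lp' Up']].
  destruct (is_C_exists _ _ _ Up') as [m Cm]. exists m. split; auto.
  pose proof (proj2 Cm p' Up'). rewrite Lp', length_prog in H. lia.
Qed.

(** * No left-total machine is effectively optimal *)

Fixpoint all_bitstrings (L : nat) : list bitstring :=
  match L with
  | 0 => [[]]
  | S L => map (cons false) (all_bitstrings L) ++ map (cons true) (all_bitstrings L)
  end.

Lemma all_bitstrings_spec : forall L p, In p (all_bitstrings L) <-> length p = L.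
Proof.
  induction L; simpl; intros p.
  - split; [intros [<-|[]]; auto|]. destruct p; [auto|discriminate].
  - rewrite in_app_iff, !in_map_iff. split.
    + intros [[q [<- Hq]]|[q [<- Hq]]]; simpl; f_equal; apply IHL; auto.
    + destruct p as [|[|] q]; intros H; try discriminate; injection H as H;
        [right|left]; exists q; split; auto; apply IHL; auto.
Qed.

Lemma all_bitstrings_count : forall L, length (all_bitstrings L) = 2 ^ L.
Proof. induction L; simpl; auto. rewrite length_app, !length_map. unfold bitstring in *. lia. Qed.

Lemma all_bitstrings_NoDup : forall L, NoDup (all_bitstrings L).
Proof.
  induction L; simpl. { constructor; auto. constructor. }
  apply NoDup_app.
  - apply NoDup_map_NoDup_ForallPairs; auto. intros a b _ _ E. injection E; auto.
  - apply NoDup_map_NoDup_ForallPairs; auto. intros a b _ _ E. injection E; auto.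
  - intros a Ha Hb. apply in_map_iff in Ha as [q [<- _]]. apply in_map_iff in Hb as [r [E _]]. discriminate.
Qed.

Lemma pigeonhole_bitstrings : forall (f : bitstring -> nat) L n,
  (forall w, length w = L -> f w < n) -> n < 2 ^ L ->
  exists w1 w2, w1 <> w2 /\ f w1 = f w2.
Proof.
  intros f L n Hf Hn. apply NNPP. intros Hinj.
  assert (ND : NoDup (map f (all_bitstrings L))).
  { apply NoDup_map_NoDup_ForallPairs; [|apply all_bitstrings_NoDup].
    intros a b _ _ E. apply NNPP. intros Hab. apply Hinj. eauto. }
  pose proof (NoDup_incl_length ND (l' := seq 0 n)) as H.
  rewrite length_map, all_bitstrings_count, length_seq in H.
  enough (2 ^ L <= n) by lia. apply H.
  intros y Hy. apply in_map_iff in Hy as [w [<- Hw]]. apply in_seq.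
  apply all_bitstrings_spec in Hw. specialize (Hf w Hw). lia.
Qed.

Lemma double_le_pow2 : forall L, 2 * L <= 2 ^ L.
Proof. induction L; simpl; auto. destruct L; simpl in *; lia. Qed.

Lemma left_total_lexrank_le : forall (U : machine) x y, left_total U -> length x = length y ->
  lexrank x <= lexrank y -> in_dom U y -> in_dom U x.
Proof.
  intros U x y LT Hl Hr Hy. destruct (Nat.eq_dec (lexrank x) (lexrank y)) as [E|E].
  - rewrite (lexrank_inj _ _ Hl E). exact Hy.
  - apply (LT y x); auto. apply lex_lt_rank; [auto|lia].
Qed.

Definition collision_run_l (k s : nat) : nat := run k (prog_num k (cfst (cfst s))) (csnd s).
Definition collision_run_r (k s : nat) : nat := run k (prog_num k (csnd (cfst s))) (csnd s).

(* [collision_test k s = 0] iff [s] codes [((w1, w2), t)] with [w1 <> w2] such that code [k]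
   halts within [t] steps on [1^k 0 w1] and [1^k 0 w2], with outputs of equal length. *)
Definition collision_test (k s : nat) : nat :=
  if Nat.eqb (cfst (cfst s)) (csnd (cfst s)) then 1 else
  match collision_run_l k s with 0 => 1 | S _ =>
  match collision_run_r k s with 0 => 1 | S _ =>
  if Nat.eqb (bs_length_num (pred (collision_run_l k s))) (bs_length_num (pred (collision_run_r k s)))
  then 0 else 1 end end.

Definition collision_winner (k s : nat) : nat :=
  match bs_rank_num (pred (collision_run_l k s)) - bs_rank_num (pred (collision_run_r k s)) with
  | 0 => csnd (cfst s)
  | S _ => cfst (cfst s)
  end.

Definition v_test (s m : nat) : nat :=
  match prog_valid m with 0 => 1 | S _ => collision_test (prog_index m) s end.
Definition v_out_test (j s m : nat) : nat :=
  if Nat.eqb (prog_input m) (collision_winner (prog_index m) s) then 0 else 1.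

Definition tCollisionRunL : tcode :=
  tcode_ext (Run (tProj 0) (tComp tProgNum [tProj 0; Fst (Fst (tProj 1))]) (Snd (tProj 1)))
    (fun xs => collision_run_l (nth 0 xs 0) (nth 1 xs 0)) (fun _ => eq_refl).
Definition tCollisionRunR : tcode :=
  tcode_ext (Run (tProj 0) (tComp tProgNum [tProj 0; Snd (Fst (tProj 1))]) (Snd (tProj 1)))
    (fun xs => collision_run_r (nth 0 xs 0) (nth 1 xs 0)) (fun _ => eq_refl).
Definition tCollisionTest : tcode :=
  tcode_ext (IfEq (Fst (Fst (tProj 1))) (Snd (Fst (tProj 1))) (tConst 1)
    (IfZero (tComp tCollisionRunL [tProj 0; tProj 1]) (tConst 1)
    (IfZero (tComp tCollisionRunR [tProj 0; tProj 1]) (tConst 1)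
    (IfEq (tComp tBsLength [tComp tPred [tComp tCollisionRunL [tProj 0; tProj 1]]])
    (tComp tBsLength [tComp tPred [tComp tCollisionRunR [tProj 0; tProj 1]]]) (tConst 0) (tConst 1)))))
    (fun xs => collision_test (nth 0 xs 0) (nth 1 xs 0)) (fun _ => eq_refl).
Definition tCollisionWinner : tcode :=
  tcode_ext (IfZero (tComp tSub [tComp tBsRank [tComp tPred [tComp tCollisionRunL [tProj 0; tProj 1]]];
    tComp tBsRank [tComp tPred [tComp tCollisionRunR [tProj 0; tProj 1]]]])
    (Snd (Fst (tProj 1))) (Fst (Fst (tProj 1))))
    (fun xs => collision_winner (nth 0 xs 0) (nth 1 xs 0)) (fun _ => eq_refl).
Definition tVTest : tcode :=
  tcode_ext (IfZero (tComp tProgValid [tProj 1]) (tConst 1)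
    (tComp tCollisionTest [tComp tProgIndex [tProj 1]; tProj 0]))
    (fun xs => v_test (nth 0 xs 0) (nth 1 xs 0)) (fun _ => eq_refl).
Definition tVOutTest : tcode :=
  tcode_ext (IfEq (tComp tProgInput [tProj 2]) (tComp tCollisionWinner [tComp tProgIndex [tProj 2]; tProj 1])
    (tConst 0) (tConst 1))
    (fun xs => v_out_test (nth 0 xs 0) (nth 1 xs 0) (nth 2 xs 0)) (fun _ => eq_refl).

(* The outer search ignores its own counter, so it diverges unless the input is the winner. *)
Definition v_code : code := cComp (cMin (tc_code tVOutTest)) [cMin (tc_code tVTest); cProj 0].
Definition v_machine : machine := machine_of v_code.

Lemma v_machine_prog : forall k w y, v_machine (prog k w) = Some y <->
  y = [] /\ exists s, collision_test k s = 0 /\ (forall j, j < s -> collision_test k j <> 0) /\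
                      bs2nat w = collision_winner k s.
Proof.
  intros k w y. destruct (prog_fields k w) as [Hv [Hk Hw]].
  assert (Ht : forall j, v_test j (bs2nat (prog k w)) = collision_test k j).
  { intros. unfold v_test. destruct (prog_valid _); [lia|]. rewrite Hk. auto. }
  unfold v_machine, v_code. rewrite machine_of_spec, eval_search_spec. split.
  - intros [s [A [B C]]]. apply (eval_min_tcode tVOutTest) in C as [C D].
    change (v_test s (bs2nat (prog k w)) = 0) in A. rewrite Ht in A.
    split.
    + destruct y as [|b y]; auto. exfalso. apply (D 0); [simpl; destruct b; lia|exact C].
    + change (v_out_test (bs2nat y) s (bs2nat (prog k w)) = 0) in C. unfold v_out_test in C.
      rewrite Hk, Hw in C. destruct (Nat.eqb_spec (bs2nat w) (collision_winner k s)) as [E|]; [|discriminate].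
      exists s. split; [auto|split; auto]. intros j Hj. rewrite <- Ht. exact (B j Hj).
  - intros [-> [s [A [B C]]]]. exists s. split; [|split].
    + change (v_test s (bs2nat (prog k w)) = 0). rewrite Ht. auto.
    + intros j Hj. change (v_test j (bs2nat (prog k w)) <> 0). rewrite Ht. exact (B j Hj).
    + apply (eval_min_tcode tVOutTest). split; [|intros j Hj; simpl in Hj; lia].
      change (v_out_test 0 s (bs2nat (prog k w)) = 0). unfold v_out_test. rewrite Hk, Hw, C, Nat.eqb_refl. auto.
Qed.

Section NoEffectiveOptimality.

Variable U : machine.
Hypothesis U_left_total : left_total U.
Variables (e : code) (h : bitstring -> bitstring) (c : nat).
Hypothesis e_computes_h : forall x, eval e [bs2nat x] (bs2nat (h x)).
Hypothesis h_short : forall x, length (h x) <= length x + c.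
Hypothesis h_translates : forall x, v_machine x = U (h x).

Let k : nat := enc_code e.

Lemma run_prog_h : forall w t o, run k (bs2nat (prog k w)) t = S o -> o = bs2nat (h (prog k w)).
Proof.
  intros w t o H. assert (eval e [bs2nat (prog k w)] o) by (apply run_correct; eauto).
  eapply eval_deterministic; eauto.
Qed.

Lemma h_prog_length_collision : exists w1 w2, w1 <> w2 /\ length (h (prog k w1)) = length (h (prog k w2)).
Proof.
  set (L := k + c + 3).
  apply (pigeonhole_bitstrings (fun w => length (h (prog k w))) L (2 * L - 1)).
  - intros w Hw. pose proof (h_short (prog k w)). rewrite length_prog, Hw in H. lia.
  - pose proof (double_le_pow2 L). lia.
Qed.

Lemma collision_exists : exists s, collision_test k s = 0.
Proof.
  destruct h_prog_length_collision as [w1 [w2 [Hne Hl]]].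
  destruct (proj1 (run_correct e _ _) (e_computes_h (prog k w1))) as [t1 T1].
  destruct (proj1 (run_correct e _ _) (e_computes_h (prog k w2))) as [t2 T2].
  exists (cpair (cpair (bs2nat w1) (bs2nat w2)) (t1 + t2)).
  unfold collision_test, collision_run_l, collision_run_r. rewrite !cfst_cpair, !csnd_cpair.
  destruct (Nat.eqb_spec (bs2nat w1) (bs2nat w2)) as [E|_]. { apply bs2nat_inj in E. contradiction. }
  rewrite !prog_num_spec. fold k in T1, T2.
  rewrite (run_mono _ _ _ (t1 + t2) _ T1) by lia. rewrite (run_mono _ _ _ (t1 + t2) _ T2) by lia. simpl.
  rewrite !bs_length_num_spec, Hl, Nat.eqb_refl. auto.
Qed.

Lemma collision_found : forall s, collision_test k s = 0 ->
  exists A B, A <> B /\ length (h (prog k A)) = length (h (prog k B)) /\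
    lexrank (h (prog k A)) <= lexrank (h (prog k B)) /\ collision_winner k s = bs2nat B.
Proof.
  intros s Hs. unfold collision_test in Hs. unfold collision_winner.
  destruct (bs2nat_surj (cfst (cfst s))) as [W1 E1]. destruct (bs2nat_surj (csnd (cfst s))) as [W2 E2].
  destruct (Nat.eqb_spec (cfst (cfst s)) (csnd (cfst s))) as [_|Hne]; [discriminate|].
  destruct (collision_run_l k s) as [|o1] eqn:R1; [discriminate|].
  destruct (collision_run_r k s) as [|o2] eqn:R2; [discriminate|].
  simpl in Hs |- *. destruct (Nat.eqb_spec (bs_length_num o1) (bs_length_num o2)) as [Hl|]; [|discriminate].
  unfold collision_run_l, collision_run_r in R1, R2.
  rewrite <- E1, prog_num_spec in R1. rewrite <- E2, prog_num_spec in R2.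
  apply run_prog_h in R1, R2. subst o1 o2. rewrite !bs_length_num_spec in Hl. rewrite !bs_rank_num_spec.
  assert (W1 <> W2) by (intros ->; congruence).
  destruct (lexrank (h (prog k W1)) - lexrank (h (prog k W2))) eqn:D.
  - exists W1, W2. repeat split; auto; lia.
  - exists W2, W1. repeat split; auto; lia.
Qed.

Lemma collision_winner_dominated : forall s A B, collision_test k s = 0 ->
  (forall j, collision_test k j = 0 -> s <= j) -> A <> B ->
  length (h (prog k A)) = length (h (prog k B)) -> lexrank (h (prog k A)) <= lexrank (h (prog k B)) ->
  collision_winner k s <> bs2nat B.
Proof.
  intros s A B Hs Hmin Hne Hl Hr Hb.
  assert (VB : in_dom U (h (prog k B))).
  { exists []. rewrite <- h_translates. apply v_machine_prog. split; auto.
    exists s. split; [auto|split; auto]. intros j Hj E. specialize (Hmin j E). lia. }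
  destruct (left_total_lexrank_le _ _ _ U_left_total Hl Hr VB) as [y Hy].
  rewrite <- h_translates in Hy. apply v_machine_prog in Hy as [_ [s' [A1 [A2 A3]]]].
  assert (s' = s).
  { specialize (Hmin s' A1). destruct (Nat.eq_dec s' s); auto. exfalso. apply (A2 s); [lia|auto]. }
  subst s'. apply Hne, bs2nat_inj. congruence.
Qed.

Lemma translation_impossible : False.
Proof.
  destruct (ex_least _ collision_exists) as [s [Hs Hmin]].
  destruct (collision_found s Hs) as [A [B [Hne [Hl [Hr Hw]]]]].
  exact (collision_winner_dominated s A B Hs Hmin Hne Hl Hr Hw).
Qed.

End NoEffectiveOptimality.

Theorem no_left_total_effectively_optimal : forall U : machine, left_total U -> ~ effectively_optimal U.
Proof.
  intros U LT EO. destruct (EO v_machine (machine_of_computable v_code)) as [h [[e He] [c Hc]]].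
  apply (translation_impossible U LT e h c).
  - intros x. apply He. reflexivity.
  - intros x. apply Hc.
  - intros x. apply Hc.
Qed.

Theorem proposition2p7 :
  (exists U : machine, partial_computable U /\ left_total U /\ optimal U) /\
  (forall U : machine, partial_computable U -> left_total U ->
     ~ effectively_optimal U).
Proof.
  split.
  - exists u_machine. split; [apply machine_of_computable|split].
    + apply u_machine_left_total.
    + apply u_machine_optimal.
  - intros U _. apply no_left_total_effectively_optimal.
Qed.
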